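(* Let $C\subset\mathbb R^3$ be a non-closed embedded curve of length $l>0$ with nowhere vanishing curvature and orientation-compatible arc-length parametrization $\mathbf c:[-l/2,l/2]\to\mathbb R^3$, and suppose $C$ does not lie in any plane. Let $F\in\mathcal D_*(C)$ be a normal form with $F(s,0)=\mathbf c(s)$. Then $F(\Omega_\epsilon)$ is congruent to $F_*(\Omega_\epsilon)$ for sufficiently small $\epsilon>0$ if and only if $C$ has a positive symmetry.
   Context: $-C$ is $C$ with the opposite orientation; $\kappa$ is the curvature of $\mathbf c$; $\Omega_\epsilon=[-l/2,l/2]\times(-\epsilon,\epsilon)$. ''$F(\Omega_\epsilon)$ congruent to $G(\Omega_\epsilon)$ for sufficiently small $\epsilon$'' means there exist an isometry $T$ of $\mathbb R^3$ and $\epsilon_0>0$ with $T(F(\Omega_\epsilon))=G(\Omega_\epsilon)$ for all $0<\epsilon<\epsilon_0$. A developable strip along $C$ is the germ of a $C^\infty$ embedding $f(u,v)=f(u,0)+v\,\xi_f(u)$ with $\mathbf c_f(u)=f(u,0)$ parametrizing $C$, $\xi_f$ unit, and zero Gaussian curvature; with the Frenet frame $(\mathbf e,\mathbf n,\mathbf b)$ of $\mathbf c_f$ write $\xi_f=\cos\beta_f\,\mathbf e+\sin\beta_f(\cos\alpha_f\,\mathbf n+\sin\alpha_f\,\mathbf b)$. $\mathcal D(C)$: strips with $\mathbf c_f$ inducing the orientation of $C$ and $0<|\cos\alpha_f|<1$, normalized by $0<|\alpha_f|<\pi/2$ (first angular function), $0<\beta_f<\pi$. Geodesic curvature $\mu_f=\kappa_f\cos\alpha_f$;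 admissible ($\in\mathcal D_*(C)$) if $\mu_f<\min\kappa_f$ everywhere. A normal form is such a strip $F(s,v)$ defined near $[-l/2,l/2]\times\{0\}$ with $s\mapsto F(s,0)$ an arc-length parametrization of $C$ (either orientation); it is determined by that parametrization and its first angular function. Inverse: $F_*\in\mathcal D_*(-C)$ is the normal form with $F_*(s,0)=\mathbf c(-s)$ whose first angular function (w.r.t. the Frenet frame of $s\mapsto\mathbf c(-s)$) has the same sign as $\alpha_F(s)$ and satisfies $\kappa(-s)\cos\alpha_{F_*}(s)=\kappa(s)\cos\alpha_F(s)$. A positive symmetry of $C$ is an orientation-preserving isometry $T\ne\mathrm{id}$ of $\mathbb R^3$ with $T(C)=C$. *)

From Stdlib Require Import Reals List.
From Coquelicot Require Import Coquelicot.
Open Scope R_scope.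

Definition vec := (R * R * R)%type.
Definition mkv (x y z : R) : vec := (x, y, z).
Definition vx (p : vec) : R := fst (fst p).
Definition vy (p : vec) : R := snd (fst p).
Definition vz (p : vec) : R := snd p.
Definition vadd (p q : vec) : vec := mkv (vx p + vx q) (vy p + vy q) (vz p + vz q).
Definition vsub (p q : vec) : vec := mkv (vx p - vx q) (vy p - vy q) (vz p - vz q).
Definition vscale (a : R) (p : vec) : vec := mkv (a * vx p) (a * vy p) (a * vz p).
Definition dot (p q : vec) : R := vx p * vx q + vy p * vy q + vz p * vz q.
Definition cross (p q : vec) : vec :=
  mkv (vy p * vz q - vz p * vy q) (vz p * vx q - vx p * vz q) (vx p * vy q - vy p * vx q).
Definition vnorm (p : vec) : R := sqrt (dot p p).
Definition vdist (p q : vec) : R := vnorm (vsub p q).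
Definition det3 (a b c : vec) : R := dot (cross a b) c.
Definition vzero : vec := mkv 0 0 0.
Definition e1 : vec := mkv 1 0 0.
Definition e2 : vec := mkv 0 1 0.
Definition e3 : vec := mkv 0 0 1.

Definition vderive (f : R -> vec) (t : R) : vec :=
  mkv (Derive (fun s => vx (f s)) t) (Derive (fun s => vy (f s)) t)
      (Derive (fun s => vz (f s)) t).

Definition open1 (U : R -> Prop) : Prop :=
  forall x, U x -> exists e, 0 < e /\ forall y, Rabs (y - x) < e -> U y.
Definition open2 (U : R -> R -> Prop) : Prop :=
  forall u v, U u v -> exists e, 0 < e /\
    forall u' v', Rabs (u' - u) < e -> Rabs (v' - v) < e -> U u' v'.

Definition smooth1_on (U : R -> Prop) (g : R -> R) : Prop :=
  open1 U /\ forall n x, U x -> ex_derive_n g n x.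
Definition vsmooth1_on (U : R -> Prop) (f : R -> vec) : Prop :=
  smooth1_on U (fun s => vx (f s)) /\ smooth1_on U (fun s => vy (f s)) /\
  smooth1_on U (fun s => vz (f s)).

(** iterated partial derivatives of g : R -> R -> R ; true = d/du, false = d/dv *)
Fixpoint pd (l : list bool) (g : R -> R -> R) : R -> R -> R :=
  match l with
  | nil => g
  | b :: l' => if b then (fun u v => Derive (fun t => pd l' g t v) u)
               else (fun u v => Derive (fun t => pd l' g u t) v)
  end.

Definition smooth2_on (U : R -> R -> Prop) (g : R -> R -> R) : Prop :=
  open2 U /\ forall (l : list bool) u v, U u v ->
    ex_derive (fun t => pd l g t v) u /\ ex_derive (fun t => pd l g u t) v /\
    continuous (fun p : R * R => pd l g (fst p) (snd p)) (u, v).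
Definition vsmooth2_on (U : R -> R -> Prop) (F : R -> R -> vec) : Prop :=
  smooth2_on U (fun u v => vx (F u v)) /\ smooth2_on U (fun u v => vy (F u v)) /\
  smooth2_on U (fun u v => vz (F u v)).

Definition pu (F : R -> R -> vec) : R -> R -> vec := fun u v => vderive (fun t => F t v) u.
Definition pv (F : R -> R -> vec) : R -> R -> vec := fun u v => vderive (fun t => F u t) v.

Definition gauss_curv (F : R -> R -> vec) (u v : R) : R :=
  let fu := pu F u v in let fv := pv F u v in
  let nu := vscale (/ vnorm (cross fu fv)) (cross fu fv) in
  let E := dot fu fu in let Fc := dot fu fv in let G := dot fv fv in
  let L := dot (pu (pu F) u v) nu in
  let M := dot (pv (pu F) u v) nu in
  let N := dot (pv (pv F) u v) nu in
  (L * N - M * M) / (E * G - Fc * Fc).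

Definition tangent (g : R -> vec) (s : R) : vec := vderive g s.
Definition curv (g : R -> vec) (s : R) : R := vnorm (vderive (vderive g) s).
Definition pnormal (g : R -> vec) (s : R) : vec :=
  vscale (/ curv g s) (vderive (vderive g) s).
Definition binormal (g : R -> vec) (s : R) : vec := cross (tangent g s) (pnormal g s).

Definition Iv (l s : R) : Prop := - (l / 2) <= s <= l / 2.
Definition Omega (l eps : R) (s v : R) : Prop := Iv l s /\ - eps < v < eps.

(** The germ is represented by a total function together with an
    open neighbourhood U of [-l/2,l/2] x {0} on which these properties hold;
    "embedding" = injective immersion on U (equivalent for germs along a
    compact set). *)
Definition normal_form_strip (l : R) (g : R -> vec) (F : R -> R -> vec) : Prop :=
  exists (U : R -> R -> Prop) (xi : R -> vec),
    open2 U /\ (forall s, Iv l s -> U s 0) /\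
    vsmooth2_on U F /\
    (forall s v, U s v -> cross (pu F s v) (pv F s v) <> vzero) /\
    (forall s v s' v', U s v -> U s' v' -> F s v = F s' v' -> s = s' /\ v = v') /\
    (forall s v, U s v -> F s v = vadd (g s) (vscale v (xi s))) /\
    (forall s v, U s v -> vnorm (xi s) = 1) /\
    (forall s v, U s v -> gauss_curv F s v = 0).

Definition first_angular (l : R) (g : R -> vec) (F : R -> R -> vec) (alpha : R -> R) : Prop :=
  exists beta : R -> R, forall s, Iv l s ->
    0 < Rabs (alpha s) < PI / 2 /\ 0 < beta s < PI /\
    pv F s 0 = vadd (vscale (cos (beta s)) (tangent g s))
                    (vscale (sin (beta s))
                       (vadd (vscale (cos (alpha s)) (pnormal g s))
                             (vscale (sin (alpha s)) (binormal g s)))).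

(** F is a normal form in D_*: admissible, i.e. the geodesic curvature
    mu = kappa cos alpha is < min kappa everywhere on [-l/2,l/2]. *)
Definition in_Dstar_normal (l : R) (g : R -> vec) (F : R -> R -> vec) (alpha : R -> R) : Prop :=
  normal_form_strip l g F /\ first_angular l g F alpha /\
  (forall s t, Iv l s -> Iv l t -> curv g s * cos (alpha s) < curv g t).

Definition good_curve (l : R) (c : R -> vec) : Prop :=
  0 < l /\
  (exists U, (forall s, Iv l s -> U s) /\ vsmooth1_on U c) /\
  (forall s, Iv l s -> vnorm (vderive c s) = 1) /\
  (forall s t, Iv l s -> Iv l t -> c s = c t -> s = t) /\
  (forall s, Iv l s -> 0 < curv c s) /\
  ~ (exists (m : vec) (d : R), m <> vzero /\ forall s, Iv l s -> dot m (c s) = d).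

Definition isometry (T : vec -> vec) : Prop := forall p q, vdist (T p) (T q) = vdist p q.
Definition orientation_preserving (T : vec -> vec) : Prop :=
  0 < det3 (vsub (T e1) (T vzero)) (vsub (T e2) (T vzero)) (vsub (T e3) (T vzero)).

Definition congruent_small (l : R) (F G : R -> R -> vec) : Prop :=
  exists (T : vec -> vec) (eps0 : R), isometry T /\ 0 < eps0 /\
    forall eps, 0 < eps < eps0 ->
      forall p : vec,
        (exists s v, Omega l eps s v /\ p = T (F s v)) <->
        (exists s v, Omega l eps s v /\ p = G s v).

Definition positive_symmetry (l : R) (c : R -> vec) (T : vec -> vec) : Prop :=
  isometry T /\ orientation_preserving T /\ (exists p, T p <> p) /\
  (forall s, Iv l s -> exists t, Iv l t /\ T (c s) = c t) /\
  (forall t, Iv l t -> exists s, Iv l s /\ T (c s) = c t).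

(* A congruence [T] with [T (F Omega_eps) = F_* Omega_eps] for all small [eps] maps [C]
   into itself: [T (c s)] lies within [eps] of [C] for every [eps].  An orthogonal
   affine map sending the arc-length parametrized curve [C] into itself acts on the
   parameter as [s |-> +-s], because the induced reparametrization [psi] has
   derivative [c' (psi s) . A c' s], of square 1 and continuous, hence constant.  If it
   is [s |-> s], [T] fixes the non-planar curve [C] pointwise, so [T = id]; otherwise
   [T] reverses [C].  The image under [T] of the ruling of [F] at [c 0] lies in the
   tangent plane of [F_*] there; in the Frenet frame this reads
   [sin alpha_* cos alpha +- cos alpha_* sin alpha = 0], which, [alpha] and [alpha_*]
   having the same sign, forces [T] to reverse [C] and preserve orientation.
   Conversely, a positive symmetry reverses [C], so [T o F] and [F_*] are developable
   strips along [-C] with the same first angular function (by the curvature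
   condition).  The ruling of [F_*] lies in the plane of [-c'] and of the ruling of
   [T o F]; differentiating this decomposition, developability of both strips kills
   the [-c'] component, so the rulings and the strips agree. *)

From Stdlib Require Import Reals Lra Psatz ClassicalEpsilon Classical.
From Coquelicot Require Import Coquelicot.
Open Scope R_scope.

Definition linmap (f1 f2 f3 p : vec) : vec :=
  vadd (vadd (vscale (vx p) f1) (vscale (vy p) f2)) (vscale (vz p) f3).

Lemma vec_ext (p q : vec) : vx p = vx q -> vy p = vy q -> vz p = vz q -> p = q.
Proof. destruct p as [[a b] c], q as [[d e] f]; unfold vx, vy, vz; simpl; intros; subst; auto. Qed.

Ltac vexpand :=
  unfold linmap, det3, vzero, e1, e2, e3, cross, dot, vadd, vsub, vscale, mkv, vx, vy, vz;
  cbn [fst snd].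
Ltac vexpand_in H :=
  unfold linmap, det3, vzero, e1, e2, e3, cross, dot, vadd, vsub, vscale, mkv, vx, vy, vz in H;
  cbn [fst snd] in H.
Ltac vring := try apply vec_ext; vexpand; ring.
Ltac split3 := refine (conj _ (conj _ _)).

Lemma dot_ge0 p : 0 <= dot p p.
Proof. vexpand; nra. Qed.

Lemma dot_eq0 p : dot p p = 0 -> p = vzero.
Proof.
  destruct p as [[a b] c]; intros H; vexpand_in H.
  assert (a = 0 /\ b = 0 /\ c = 0) as (-> & -> & ->) by (repeat split; nra).
  reflexivity.
Qed.

Lemma dot_comm p q : dot p q = dot q p.
Proof. vring. Qed.

Lemma vadd_0_l p : vadd vzero p = p.
Proof. vring. Qed.

Lemma vsub_eq0 p q : vsub p q = vzero -> p = q.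
Proof.
  intros H.
  apply vec_ext; [apply (f_equal vx) in H | apply (f_equal vy) in H | apply (f_equal vz) in H];
    vexpand_in H; vexpand; lra.
Qed.

Lemma dot_self_pos p : p <> vzero -> 0 < dot p p.
Proof.
  intros Hp; destruct (dot_ge0 p) as [|E]; [assumption|].
  exfalso; apply Hp, dot_eq0; auto.
Qed.

Lemma vnorm_eq1 p : vnorm p = 1 -> dot p p = 1.
Proof. unfold vnorm; intros H; rewrite <- (sqrt_sqrt (dot p p)) by apply dot_ge0; rewrite H; ring. Qed.

Lemma cauchy_schwarz p q : dot p q * dot p q <= dot p p * dot q q.
Proof.
  assert (E : dot p p * dot q q - dot p q * dot p q = dot (cross p q) (cross p q)) by vring.
  pose proof (dot_ge0 (cross p q)); lra.
Qed.

Lemma Rabs_dot_unit p q : dot p p = 1 -> dot q q = 1 -> Rabs (dot p q) <= 1.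
Proof. intros Hp Hq; pose proof (cauchy_schwarz p q) as H; rewrite Hp, Hq in H; apply Rabs_le; nra. Qed.

Definition l1norm (q : vec) : R := Rabs (vx q) + Rabs (vy q) + Rabs (vz q).

Lemma l1norm_ge0 q : 0 <= l1norm q.
Proof.
  unfold l1norm; pose proof (Rabs_pos (vx q)); pose proof (Rabs_pos (vy q)); pose proof (Rabs_pos (vz q)).
  lra.
Qed.

Lemma Rabs_dot_le p q K : 0 <= K ->
  Rabs (vx q) <= K -> Rabs (vy q) <= K -> Rabs (vz q) <= K ->
  Rabs (dot p q) <= l1norm p * K.
Proof.
  intros HK Hx Hy Hz; unfold dot, l1norm.
  eapply Rle_trans; [apply Rabs_triang|].
  eapply Rle_trans; [apply Rplus_le_compat_r, Rabs_triang|].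
  rewrite !Rabs_mult.
  pose proof (Rmult_le_compat_l _ _ _ (Rabs_pos (vx p)) Hx).
  pose proof (Rmult_le_compat_l _ _ _ (Rabs_pos (vy p)) Hy).
  pose proof (Rmult_le_compat_l _ _ _ (Rabs_pos (vz p)) Hz).
  lra.
Qed.

Lemma Rabs_dot_unit_le p q K : dot p p = 1 -> 0 <= K ->
  Rabs (vx q) <= K -> Rabs (vy q) <= K -> Rabs (vz q) <= K -> Rabs (dot p q) <= 3 * K.
Proof.
  intros Hp HK Hx Hy Hz.
  assert (Hc : Rabs (vx p) <= 1 /\ Rabs (vy p) <= 1 /\ Rabs (vz p) <= 1).
  { pose proof (dot_ge0 p); unfold dot in Hp; repeat split; apply Rabs_le; split; nra. }
  pose proof (Rabs_dot_le p q K HK Hx Hy Hz); unfold l1norm in *; nra.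
Qed.

Record orthonormal (f1 f2 f3 : vec) : Prop := {
  on11 : dot f1 f1 = 1; on22 : dot f2 f2 = 1; on33 : dot f3 f3 = 1;
  on12 : dot f1 f2 = 0; on13 : dot f1 f3 = 0; on23 : dot f2 f3 = 0 }.

Section Linmap.
Variables f1 f2 f3 : vec.
Local Notation A := (linmap f1 f2 f3).

Lemma linmap_scale a p : A (vscale a p) = vscale a (A p).
Proof. vring. Qed.

Lemma det3_linmap p q r : det3 (A p) (A q) (A r) = det3 f1 f2 f3 * det3 p q r.
Proof. vring. Qed.

Lemma dot_linmap_expand p q :
  dot (A p) (A q) =
  vx p * vx q * dot f1 f1 + vy p * vy q * dot f2 f2 + vz p * vz q * dot f3 f3
  + (vx p * vy q + vy p * vx q) * dot f1 f2 + (vx p * vz q + vz p * vx q) * dot f1 f3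
  + (vy p * vz q + vz p * vy q) * dot f2 f3.
Proof. vring. Qed.

Hypothesis Hon : orthonormal f1 f2 f3.

Lemma dot_linmap p q : dot (A p) (A q) = dot p q.
Proof.
  destruct Hon as [H11 H22 H33 H12 H13 H23].
  rewrite dot_linmap_expand, H11, H22, H33, H12, H13, H23; vring.
Qed.

Lemma det3_orthonormal : det3 f1 f2 f3 = 1 \/ det3 f1 f2 f3 = -1.
Proof.
  destruct Hon as [H11 H22 H33 H12 H13 H23].
  assert (E : det3 f1 f2 f3 * det3 f1 f2 f3 =
    dot f1 f1 * (dot f2 f2 * dot f3 f3 - dot f2 f3 * dot f2 f3)
    - dot f1 f2 * (dot f1 f2 * dot f3 f3 - dot f2 f3 * dot f1 f3)
    + dot f1 f3 * (dot f1 f2 * dot f2 f3 - dot f2 f2 * dot f1 f3)) by vring.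
  rewrite H11, H22, H33, H12, H13, H23 in E; nra.
Qed.
End Linmap.

Lemma vdist_eq_sq p q r s :
  vdist p q = vdist r s -> dot (vsub p q) (vsub p q) = dot (vsub r s) (vsub r s).
Proof. unfold vdist, vnorm; intros H; apply sqrt_inj; auto using dot_ge0. Qed.

Lemma isometry_affine T : isometry T ->
  let f1 := vsub (T e1) (T vzero) in
  let f2 := vsub (T e2) (T vzero) in
  let f3 := vsub (T e3) (T vzero) in
  orthonormal f1 f2 f3 /\ forall p, T p = vadd (T vzero) (linmap f1 f2 f3 p).
Proof.
  intros HT f1 f2 f3.
  set (S := fun p => vsub (T p) (T vzero)).
  assert (HS : forall p q, dot (vsub (S p) (S q)) (vsub (S p) (S q)) = dot (vsub p q) (vsub p q)).
  { intros p q; rewrite <- (vdist_eq_sq _ _ _ _ (HT p q)); unfold S; vring. }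
  assert (HS0 : forall p, dot (S p) (S p) = dot p p).
  { intros p; specialize (HS p vzero).
    replace (vsub (S p) (S vzero)) with (S p) in HS by (unfold S; vring).
    rewrite HS; vring. }
  assert (HD : forall p q, dot (S p) (S q) = dot p q).
  { intros p q.
    assert (E : forall u w, dot (vsub u w) (vsub u w) = dot u u + dot w w - 2 * dot u w) by (intros; vring).
    pose proof (HS p q) as H; rewrite !E, !HS0 in H; lra. }
  assert (Hon : orthonormal f1 f2 f3) by (split; unfold f1, f2, f3; fold (S e1) (S e2) (S e3);
                                          rewrite HD; vring).
  split; [exact Hon|]; intros p.
  assert (E : dot (vsub (S p) (linmap f1 f2 f3 p)) (vsub (S p) (linmap f1 f2 f3 p)) =
              dot (S p) (S p) + dot (linmap f1 f2 f3 p) (linmap f1 f2 f3 p)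
              - 2 * (vx p * dot (S p) (S e1) + vy p * dot (S p) (S e2) + vz p * dot (S p) (S e3)))
    by (unfold f1, f2, f3, S; vring).
  rewrite dot_linmap, HS0, !HD in E by exact Hon.
  assert (Z : dot (vsub (S p) (linmap f1 f2 f3 p)) (vsub (S p) (linmap f1 f2 f3 p)) = 0)
    by (rewrite E; vring).
  apply dot_eq0, vsub_eq0 in Z.
  rewrite <- Z; unfold S; vring.
Qed.

Lemma eq_vzero_of_frame E N y : dot E E = 1 -> dot N N = 1 -> dot E N = 0 ->
  dot E y = 0 -> dot N y = 0 -> det3 E N y = 0 -> y = vzero.
Proof.
  intros HE HN HEN HEy HNy HD.
  assert (T : vscale (det3 E N (cross E N)) y =
    vadd (vadd (vscale (dot E y) (cross N (cross E N))) (vscale (dot N y) (cross (cross E N) E)))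
         (vscale (dot (cross E N) y) (cross E N))) by vring.
  assert (D : det3 E N (cross E N) = dot E E * dot N N - dot E N * dot E N) by vring.
  rewrite D, HE, HN, HEN, HEy, HNy in T; change (dot (cross E N) y) with (det3 E N y) in T.
  rewrite HD in T.
  replace y with (vscale (1 * 1 - 0 * 0) y) by vring; rewrite T; vring.
Qed.

Lemma cross_linmap f1 f2 f3 e n : orthonormal f1 f2 f3 -> det3 f1 f2 f3 = 1 ->
  dot e e = 1 -> dot n n = 1 -> dot e n = 0 ->
  linmap f1 f2 f3 (cross e n) = cross (linmap f1 f2 f3 e) (linmap f1 f2 f3 n).
Proof.
  intros Hon Hd He Hn Hen.
  set (A := linmap f1 f2 f3).
  assert (HAe : dot (A e) (A e) = 1) by (unfold A; rewrite dot_linmap; auto).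
  assert (HAn : dot (A n) (A n) = 1) by (unfold A; rewrite dot_linmap; auto).
  assert (HAen : dot (A e) (A n) = 0) by (unfold A; rewrite dot_linmap; auto).
  apply vsub_eq0, (eq_vzero_of_frame (A e) (A n)); auto.
  - replace (dot (A e) (vsub (A (cross e n)) (cross (A e) (A n)))) with (dot (A e) (A (cross e n)))
      by vring.
    unfold A; rewrite dot_linmap by auto; vring.
  - replace (dot (A n) (vsub (A (cross e n)) (cross (A e) (A n)))) with (dot (A n) (A (cross e n)))
      by vring.
    unfold A; rewrite dot_linmap by auto; vring.
  - replace (det3 (A e) (A n) (vsub (A (cross e n)) (cross (A e) (A n))))
      with (det3 (A e) (A n) (A (cross e n))
            - (dot (A e) (A e) * dot (A n) (A n) - dot (A e) (A n) * dot (A e) (A n))) by vring.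
    unfold A; rewrite det3_linmap, Hd; fold A; rewrite HAe, HAn, HAen.
    replace (det3 e n (cross e n)) with (dot e e * dot n n - dot e n * dot e n) by vring.
    rewrite He, Hn, Hen; ring.
Qed.

(* With [(e, n, e x n)] the Frenet frame, [b] and [a] are the angles [beta] and [alpha]
   of the paper. *)
Definition frame_vec (e n : vec) (cb sb ca sa : R) : vec :=
  vadd (vscale cb e) (vscale sb (vadd (vscale ca n) (vscale sa (cross e n)))).

Section FrameVec.
Variables e n : vec.
Hypotheses (He : dot e e = 1) (Hn : dot n n = 1) (Hen : dot e n = 0).

Lemma dot_cross_self : dot (cross e n) (cross e n) = 1.
Proof.
  replace (dot (cross e n) (cross e n)) with (dot e e * dot n n - dot e n * dot e n) by vring.
  rewrite He, Hn, Hen; ring.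
Qed.

Lemma frame_vec_coords cb sb ca sa :
  dot e (frame_vec e n cb sb ca sa) = cb /\
  dot n (frame_vec e n cb sb ca sa) = sb * ca /\
  det3 e n (frame_vec e n cb sb ca sa) = sb * sa.
Proof.
  pose proof dot_cross_self as Hc; unfold frame_vec, det3.
  repeat split.
  - transitivity (cb * dot e e + sb * (ca * dot e n)); [vring|]; rewrite He, Hen; ring.
  - transitivity (cb * dot e n + sb * ca * dot n n); [vring|]; rewrite Hn, Hen; ring.
  - transitivity (sb * sa * dot (cross e n) (cross e n)); [vring|]; rewrite Hc; ring.
Qed.

Lemma dot_frame_vec c1 s1 c2 s2 ca sa :
  dot (frame_vec e n c1 s1 ca sa) (frame_vec e n c2 s2 ca sa) =
  c1 * c2 + s1 * s2 * (ca * ca + sa * sa).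
Proof.
  pose proof dot_cross_self as Hc; unfold frame_vec.
  transitivity (c1 * c2 * dot e e + (c1 * s2 + s1 * c2) * ca * dot e n
                + s1 * s2 * (ca * ca * dot n n + sa * sa * dot (cross e n) (cross e n))); [vring|].
  rewrite He, Hn, Hen, Hc; ring.
Qed.

Lemma linmap_frame_vec f1 f2 f3 cb sb ca sa :
  orthonormal f1 f2 f3 -> det3 f1 f2 f3 = 1 ->
  linmap f1 f2 f3 (frame_vec e n cb sb ca sa) =
  frame_vec (linmap f1 f2 f3 e) (linmap f1 f2 f3 n) cb sb ca sa.
Proof.
  intros Hon Hd; unfold frame_vec; rewrite <- cross_linmap by auto; vring.
Qed.
End FrameVec.

Lemma locally_Rabs x (P : R -> Prop) d :
  0 < d -> (forall t, Rabs (t - x) < d -> P t) -> locally x P.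
Proof. intros Hd H; exists (mkposreal d Hd); intros t Ht; apply H, Ht. Qed.

Lemma locally_Rabs_inv x (P : R -> Prop) :
  locally x P -> exists d, 0 < d /\ forall t, Rabs (t - x) < d -> P t.
Proof. intros [d H]; exists d; split; [apply cond_pos|]; intros t Ht; apply H, Ht. Qed.

Lemma locally_Rabs_lt x r : Rabs x < r -> locally x (fun t => Rabs t < r).
Proof.
  intros Hx; apply (locally_Rabs _ _ (r - Rabs x)); [lra|]; intros t Ht.
  replace t with ((t - x) + x) by ring; pose proof (Rabs_triang (t - x) x); lra.
Qed.

Definition is_vderive (f : R -> vec) (x : R) (D : vec) : Prop :=
  is_derive (fun t => vx (f t)) x (vx D) /\ is_derive (fun t => vy (f t)) x (vy D) /\
  is_derive (fun t => vz (f t)) x (vz D).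

Lemma is_vderive_unique f x D : is_vderive f x D -> vderive f x = D.
Proof.
  intros (H1 & H2 & H3); unfold vderive.
  apply vec_ext; unfold mkv, vx at 1, vy at 1, vz at 1; simpl; apply is_derive_unique; assumption.
Qed.

Lemma is_vderive_ext_loc f g x D :
  locally x (fun t => f t = g t) -> is_vderive f x D -> is_vderive g x D.
Proof.
  intros H (H1 & H2 & H3);
    split3; (eapply is_derive_ext_loc; [|eassumption]);
    apply (filter_imp (fun t => f t = g t)); auto; intros t ->; reflexivity.
Qed.

Lemma vderive_ext_loc f g x : locally x (fun t => f t = g t) -> vderive f x = vderive g x.
Proof.
  intros H; unfold vderive; apply vec_ext; cbn [vx vy vz mkv fst snd]; apply Derive_ext_loc;
    apply (filter_imp (fun t => f t = g t)); auto; intros t ->; reflexivity.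
Qed.

Lemma is_vderive_const (p : vec) x : is_vderive (fun _ => p) x vzero.
Proof. split3; exact (is_derive_const _ x). Qed.

Lemma is_vderive_add f g x D E :
  is_vderive f x D -> is_vderive g x E -> is_vderive (fun t => vadd (f t) (g t)) x (vadd D E).
Proof.
  intros (H1 & H2 & H3) (K1 & K2 & K3); split3;
    [exact (is_derive_plus _ _ x _ _ H1 K1)|exact (is_derive_plus _ _ x _ _ H2 K2)
    |exact (is_derive_plus _ _ x _ _ H3 K3)].
Qed.

Lemma is_vderive_sub f g x D E :
  is_vderive f x D -> is_vderive g x E -> is_vderive (fun t => vsub (f t) (g t)) x (vsub D E).
Proof.
  intros (H1 & H2 & H3) (K1 & K2 & K3); split3;
    [exact (is_derive_minus _ _ x _ _ H1 K1)|exact (is_derive_minus _ _ x _ _ H2 K2)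
    |exact (is_derive_minus _ _ x _ _ H3 K3)].
Qed.

Lemma is_vderive_scal k f x D :
  is_vderive f x D -> is_vderive (fun t => vscale k (f t)) x (vscale k D).
Proof.
  intros (H1 & H2 & H3); split3;
    [exact (is_derive_scal _ x _ _ H1)|exact (is_derive_scal _ x _ _ H2)|exact (is_derive_scal _ x _ _ H3)].
Qed.

Lemma is_vderive_scal_fun a f x a' D : is_derive a x a' -> is_vderive f x D ->
  is_vderive (fun t => vscale (a t) (f t)) x (vadd (vscale a' (f x)) (vscale (a x) D)).
Proof.
  intros Ha (H1 & H2 & H3); split3;
    [exact (is_derive_mult _ _ x _ _ Ha H1 Rmult_comm)|exact (is_derive_mult _ _ x _ _ Ha H2 Rmult_comm)
    |exact (is_derive_mult _ _ x _ _ Ha H3 Rmult_comm)].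
Qed.

Lemma is_vderive_line (p q : vec) x : is_vderive (fun t => vadd p (vscale t q)) x q.
Proof.
  pose proof (is_vderive_add _ _ x _ _ (is_vderive_const p x)
                (is_vderive_scal_fun (fun t => t) (fun _ => q) x 1 _ (is_derive_id x)
                   (is_vderive_const q x))) as H.
  cbv beta in H; replace (vadd vzero (vadd (vscale 1 q) (vscale x vzero))) with q in H by vring.
  exact H.
Qed.

Lemma is_vderive_affine f1 f2 f3 (b : vec) f x D : is_vderive f x D ->
  is_vderive (fun t => vadd b (linmap f1 f2 f3 (f t))) x (linmap f1 f2 f3 D).
Proof.
  intros HD.
  pose proof (is_vderive_add _ _ x _ _ (is_vderive_const b x)
    (is_vderive_add _ _ x _ _
      (is_vderive_add _ _ x _ _
        (is_vderive_scal_fun _ _ x _ _ (proj1 HD) (is_vderive_const f1 x))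
        (is_vderive_scal_fun _ _ x _ _ (proj1 (proj2 HD)) (is_vderive_const f2 x)))
      (is_vderive_scal_fun _ _ x _ _ (proj2 (proj2 HD)) (is_vderive_const f3 x)))) as H.
  cbv beta in H; replace (vadd vzero _) with (linmap f1 f2 f3 D) in H by vring.
  eapply is_vderive_ext_loc; [|exact H]; apply filter_forall; intros t; vring.
Qed.

Lemma is_derive_dot f g x D E : is_vderive f x D -> is_vderive g x E ->
  is_derive (fun t => dot (f t) (g t)) x (dot D (g x) + dot (f x) E).
Proof.
  intros (H1 & H2 & H3) (K1 & K2 & K3).
  pose proof (is_derive_plus _ _ x _ _
    (is_derive_plus _ _ x _ _ (is_derive_mult _ _ x _ _ H1 K1 Rmult_comm)
                              (is_derive_mult _ _ x _ _ H2 K2 Rmult_comm))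
    (is_derive_mult _ _ x _ _ H3 K3 Rmult_comm)) as H.
  replace (dot D (g x) + dot (f x) E) with
    (vx D * vx (g x) + vx (f x) * vx E + (vy D * vy (g x) + vy (f x) * vy E)
     + (vz D * vz (g x) + vz (f x) * vz E)) by (unfold dot; ring).
  exact H.
Qed.

Lemma is_derive_remainder (f : R -> R) x l : is_derive f x l -> forall eta, 0 < eta ->
  exists d, 0 < d /\ forall t, Rabs (t - x) < d ->
    Rabs (f t - f x - l * (t - x)) <= eta * Rabs (t - x).
Proof.
  intros H eta He; apply is_derive_Reals in H; destruct (H eta He) as [d Hd].
  exists d; split; [apply cond_pos|]; intros t Ht.
  destruct (Req_dec t x) as [->|Hne].
  - replace (f x - f x - l * (x - x)) with 0 by ring; rewrite Rabs_R0; apply Rmult_le_pos, Rabs_pos; lra.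
  - specialize (Hd (t - x) ltac:(lra) Ht); replace (x + (t - x)) with t in Hd by ring.
    replace (f t - f x - l * (t - x)) with (((f t - f x) / (t - x) - l) * (t - x)) by (field; lra).
    rewrite Rabs_mult; apply Rmult_le_compat_r; [apply Rabs_pos|lra].
Qed.

Definition vremainder (f : R -> vec) x D t : vec := vsub (vsub (f t) (f x)) (vscale (t - x) D).

Lemma is_vderive_remainder f x D : is_vderive f x D -> forall eta, 0 < eta ->
  exists d, 0 < d /\ forall t, Rabs (t - x) < d ->
    Rabs (vx (vremainder f x D t)) <= eta * Rabs (t - x) /\
    Rabs (vy (vremainder f x D t)) <= eta * Rabs (t - x) /\
    Rabs (vz (vremainder f x D t)) <= eta * Rabs (t - x).
Proof.
  intros (H1 & H2 & H3) eta He.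
  destruct (is_derive_remainder _ _ _ H1 eta He) as [d1 [P1 K1]].
  destruct (is_derive_remainder _ _ _ H2 eta He) as [d2 [P2 K2]].
  destruct (is_derive_remainder _ _ _ H3 eta He) as [d3 [P3 K3]].
  exists (Rmin d1 (Rmin d2 d3)); split; [repeat apply Rmin_glb_lt; auto|]; intros t Ht.
  pose proof (Rmin_l d1 (Rmin d2 d3)); pose proof (Rmin_r d1 (Rmin d2 d3));
    pose proof (Rmin_l d2 d3); pose proof (Rmin_r d2 d3).
  replace (vx (vremainder f x D t)) with (vx (f t) - vx (f x) - vx D * (t - x)) by (unfold vremainder; vring).
  replace (vy (vremainder f x D t)) with (vy (f t) - vy (f x) - vy D * (t - x)) by (unfold vremainder; vring).
  replace (vz (vremainder f x D t)) with (vz (f t) - vz (f x) - vz D * (t - x)) by (unfold vremainder; vring).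
  split3; [apply K1|apply K2|apply K3]; lra.
Qed.

Definition vcont (P : R -> vec) x : Prop :=
  continuity_pt (fun t => vx (P t)) x /\ continuity_pt (fun t => vy (P t)) x /\
  continuity_pt (fun t => vz (P t)) x.

Lemma is_derive_continuity_pt f x l : is_derive f x l -> continuity_pt f x.
Proof. intros H; apply derivable_continuous_pt; exists l; apply is_derive_Reals, H. Qed.

Lemma continuity_pt_eps f x : continuity_pt f x -> forall eps, 0 < eps ->
  exists d, 0 < d /\ forall t, Rabs (t - x) < d -> Rabs (f t - f x) < eps.
Proof.
  intros H eps He; apply locally_Rabs_inv; exact (proj1 (continuity_pt_locally f x) H (mkposreal eps He)).
Qed.

Lemma is_vderive_vcont f x D : is_vderive f x D -> vcont f x.
Proof. intros (H1 & H2 & H3); split3; eapply is_derive_continuity_pt; eassumption. Qed.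

Lemma continuity_pt_dot P Q x : vcont P x -> vcont Q x -> continuity_pt (fun t => dot (P t) (Q t)) x.
Proof.
  intros (P1 & P2 & P3) (Q1 & Q2 & Q3); unfold dot.
  exact (continuity_pt_plus _ _ x (continuity_pt_plus _ _ x (continuity_pt_mult _ _ x P1 Q1)
           (continuity_pt_mult _ _ x P2 Q2)) (continuity_pt_mult _ _ x P3 Q3)).
Qed.

Lemma vcont_linmap f1 f2 f3 Q x : vcont Q x -> vcont (fun t => linmap f1 f2 f3 (Q t)) x.
Proof.
  intros (Q1 & Q2 & Q3).
  assert (Hlin : forall k1 k2 k3, continuity_pt (fun t => vx (Q t) * k1 + vy (Q t) * k2 + vz (Q t) * k3) x).
  { intros k1 k2 k3.
    exact (continuity_pt_plus _ _ x (continuity_pt_plus _ _ x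
             (continuity_pt_mult _ _ x Q1 (continuity_pt_const (fun _ => k1) x (fun _ _ => eq_refl)))
             (continuity_pt_mult _ _ x Q2 (continuity_pt_const (fun _ => k2) x (fun _ _ => eq_refl))))
             (continuity_pt_mult _ _ x Q3 (continuity_pt_const (fun _ => k3) x (fun _ _ => eq_refl)))). }
  split3; [apply (continuity_pt_ext _ _ x) with (2 := Hlin (vx f1) (vx f2) (vx f3))
          |apply (continuity_pt_ext _ _ x) with (2 := Hlin (vy f1) (vy f2) (vy f3))
          |apply (continuity_pt_ext _ _ x) with (2 := Hlin (vz f1) (vz f2) (vz f3))];
    intros t; vexpand; ring.
Qed.

Lemma vcont_comp (P : R -> vec) (g : R -> R) x :
  continuity_pt g x -> vcont P (g x) -> vcont (fun t => P (g t)) x.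
Proof. intros Hg (P1 & P2 & P3); split3; apply (continuity_pt_comp g (fun y => _ (P y))); auto. Qed.

Lemma vsmooth1_is_vderive U c x : vsmooth1_on U c -> U x -> is_vderive c x (vderive c x).
Proof.
  intros [[_ H1] [[_ H2] [_ H3]]] Hx; split3; apply Derive_correct;
    [exact (H1 1%nat x Hx)|exact (H2 1%nat x Hx)|exact (H3 1%nat x Hx)].
Qed.

Lemma vsmooth1_is_vderive2 U c x :
  vsmooth1_on U c -> U x -> is_vderive (vderive c) x (vderive (vderive c) x).
Proof.
  intros [[_ H1] [[_ H2] [_ H3]]] Hx; split3; apply Derive_correct;
    [exact (H1 2%nat x Hx)|exact (H2 2%nat x Hx)|exact (H3 2%nat x Hx)].
Qed.

Lemma smooth1_locally_ex_derive_n U (f : R -> R) x n : smooth1_on U f -> U x ->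
  locally x (fun y => forall k, (k <= n)%nat -> ex_derive_n f k y).
Proof.
  intros [HU Hd] Hx; destruct (HU _ Hx) as [e [He K]].
  apply (locally_Rabs _ _ e He); intros t Ht k _; apply Hd, K, Ht.
Qed.

Lemma vderive_opp U c x : vsmooth1_on U c -> U (- x) ->
  vderive (fun s => c (- s)) x = vscale (-1) (vderive c (- x)).
Proof.
  intros (H1 & H2 & H3) Hx; unfold vderive.
  pose proof (Derive_n_comp_opp _ 1 x (smooth1_locally_ex_derive_n _ _ _ 1 H1 Hx)) as K1.
  pose proof (Derive_n_comp_opp _ 1 x (smooth1_locally_ex_derive_n _ _ _ 1 H2 Hx)) as K2.
  pose proof (Derive_n_comp_opp _ 1 x (smooth1_locally_ex_derive_n _ _ _ 1 H3 Hx)) as K3.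
  simpl in K1, K2, K3; rewrite K1, K2, K3; vring.
Qed.

Lemma vderive2_opp U c x : vsmooth1_on U c -> U (- x) ->
  vderive (vderive (fun s => c (- s))) x = vderive (vderive c) (- x).
Proof.
  intros (H1 & H2 & H3) Hx; unfold vderive, mkv, vx, vy, vz in *; simpl.
  pose proof (Derive_n_comp_opp _ 2 x (smooth1_locally_ex_derive_n _ _ _ 2 H1 Hx)) as K1.
  pose proof (Derive_n_comp_opp _ 2 x (smooth1_locally_ex_derive_n _ _ _ 2 H2 Hx)) as K2.
  pose proof (Derive_n_comp_opp _ 2 x (smooth1_locally_ex_derive_n _ _ _ 2 H3 Hx)) as K3.
  simpl in K1, K2, K3; rewrite K1, K2, K3; f_equal; [f_equal|]; ring.
Qed.

Lemma dot_pnormal_self g s : 0 < curv g s -> dot (pnormal g s) (pnormal g s) = 1.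
Proof.
  intros H; unfold pnormal.
  assert (E : curv g s * curv g s = dot (vderive (vderive g) s) (vderive (vderive g) s))
    by (unfold curv, vnorm; rewrite sqrt_sqrt; auto using dot_ge0).
  transitivity (/ curv g s * / curv g s * dot (vderive (vderive g) s) (vderive (vderive g) s)); [vring|].
  rewrite <- E; field; lra.
Qed.

Lemma vderive2_curv_pnormal g s : 0 < curv g s -> vderive (vderive g) s = vscale (curv g s) (pnormal g s).
Proof. intros H; unfold pnormal; apply vec_ext; vexpand; field; lra. Qed.

Lemma dot_vderive_vderive2 c s : is_vderive (vderive c) s (vderive (vderive c) s) ->
  locally s (fun t => dot (vderive c t) (vderive c t) = 1) ->
  dot (vderive c s) (vderive (vderive c) s) = 0.
Proof.
  intros D2 Hu.
  assert (K : is_derive (fun t => dot (vderive c t) (vderive c t)) s 0).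
  { apply (is_derive_ext_loc (fun _ => 1)); [|apply (is_derive_const 1 s)].
    apply (filter_imp _ _ (fun t H => eq_sym H) Hu). }
  pose proof (is_derive_unique _ _ _ (is_derive_dot _ _ _ _ _ D2 D2)) as U1.
  rewrite (is_derive_unique _ _ _ K), dot_comm in U1; lra.
Qed.

Lemma dot_tangent_pnormal c s : is_vderive (vderive c) s (vderive (vderive c) s) ->
  locally s (fun t => dot (vderive c t) (vderive c t) = 1) -> dot (tangent c s) (pnormal c s) = 0.
Proof.
  intros D2 Hu; unfold tangent, pnormal.
  transitivity (/ curv c s * dot (vderive c s) (vderive (vderive c) s)); [vring|].
  rewrite dot_vderive_vderive2 by auto; ring.
Qed.

Lemma continuity_pt_dist_sq c t D (p : vec) :
  is_vderive c t D -> continuity_pt (fun s => dot (vsub (c s) p) (vsub (c s) p)) t.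
Proof.
  intros H; pose proof (is_vderive_sub _ _ t _ _ H (is_vderive_const p t)) as K.
  exact (is_derive_continuity_pt _ _ _ (is_derive_dot _ _ _ _ _ K K)).
Qed.

Lemma continuity_pos_lower_bound h a b :
  (forall t, a <= t <= b -> continuity_pt h t) -> (forall t, a <= t <= b -> 0 < h t) ->
  exists m, 0 < m /\ forall t, a <= t <= b -> m <= h t.
Proof.
  intros Hc Hpos; destruct (Rle_lt_dec a b) as [Hab|Hba].
  - destruct (continuity_ab_min h a b Hab Hc) as [x [Hmin Hx]].
    exists (h x); split; [apply Hpos|]; auto.
  - exists 1; split; [lra|]; intros t Ht; lra.
Qed.

Section CurveOnInterval.
Variables (l : R) (c : R -> vec).
Hypothesis Hdc : forall t, Iv l t -> is_vderive c t (vderive c t).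

Lemma curve_separated : (forall s t, Iv l s -> Iv l t -> c s = c t -> s = t) ->
  forall t0 eps, Iv l t0 -> 0 < eps -> exists m, 0 < m /\
    forall t, Iv l t -> eps <= Rabs (t - t0) -> m <= dot (vsub (c t) (c t0)) (vsub (c t) (c t0)).
Proof.
  intros Hinj t0 eps H0 He.
  set (h := fun t => dot (vsub (c t) (c t0)) (vsub (c t) (c t0))).
  assert (Hc : forall t, Iv l t -> continuity_pt h t)
    by (intros t Ht; exact (continuity_pt_dist_sq _ _ _ _ (Hdc t Ht))).
  assert (Hpos : forall t, Iv l t -> t <> t0 -> 0 < h t).
  { intros t Ht Hne; apply dot_self_pos; intros E; apply Hne, Hinj, vsub_eq0; auto. }
  destruct (continuity_pos_lower_bound h (- (l / 2)) (t0 - eps)) as [m1 [Hm1 K1]];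
    [intros t Ht; apply Hc; unfold Iv in *; lra|intros t Ht; apply Hpos; unfold Iv in *; lra|].
  destruct (continuity_pos_lower_bound h (t0 + eps) (l / 2)) as [m2 [Hm2 K2]];
    [intros t Ht; apply Hc; unfold Iv in *; lra|intros t Ht; apply Hpos; unfold Iv in *; lra|].
  exists (Rmin m1 m2); split; [apply Rmin_glb_lt; auto|]; intros t Ht Hd.
  destruct (Rle_lt_dec t t0).
  - rewrite Rabs_left1 in Hd by lra.
    eapply Rle_trans; [apply Rmin_l|]; apply K1; unfold Iv in Ht; lra.
  - rewrite Rabs_right in Hd by lra.
    eapply Rle_trans; [apply Rmin_r|]; apply K2; unfold Iv in Ht; lra.
Qed.

Lemma on_curve_of_approx (p : vec) : 0 < l ->
  (forall eps, 0 < eps -> exists t, Iv l t /\ dot (vsub (c t) p) (vsub (c t) p) < eps) ->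
  exists t, Iv l t /\ p = c t.
Proof.
  intros Hl H; set (h := fun t => dot (vsub (c t) p) (vsub (c t) p)).
  destruct (continuity_ab_min h (- (l / 2)) (l / 2)) as [x [Hmin Hx]]; [lra|..].
  { intros t Ht; exact (continuity_pt_dist_sq _ _ _ _ (Hdc t Ht)). }
  exists x; split; [exact Hx|].
  assert (E : h x = 0).
  { apply Rle_antisym; [|apply dot_ge0]; apply Rnot_lt_le; intros Hlt.
    destruct (H (h x) Hlt) as [t [Ht Ht']]; specialize (Hmin t Ht); unfold h in *; lra. }
  symmetry; apply vsub_eq0, dot_eq0, E.
Qed.
End CurveOnInterval.

Lemma open2_uniform_strip l (U : R -> R -> Prop) : open2 U -> (forall s, Iv l s -> U s 0) ->
  exists eps, 0 < eps /\ forall s v, Iv l s -> Rabs v < eps -> U s v.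
Proof.
  intros HU H0.
  set (good := fun t e => 0 < e /\ (Iv l t -> forall u v, Rabs (u - t) < e -> Rabs v < e -> U u v)).
  assert (Ex : forall t, exists e, good t e).
  { intros t; destruct (classic (Iv l t)) as [Ht|Ht].
    - destruct (HU t 0 (H0 t Ht)) as [e [He K]]; exists e; split; auto; intros _ u v Hu Hv.
      apply K; rewrite ?Rminus_0_r; auto.
    - exists 1; split; [lra|]; contradiction. }
  set (e0 := fun t => epsilon (inhabits 1) (good t)).
  assert (He0 : forall t, good t (e0 t)) by (intros t; apply epsilon_spec, Ex).
  destruct (compactness_value_1d (- (l / 2)) (l / 2) (fun t => mkposreal (e0 t) (proj1 (He0 t))))
    as [d Hd].
  exists d; split; [apply cond_pos|]; intros s v Hs Hv.
  specialize (Hd s Hs); apply NNPP in Hd; destruct Hd as [t [Ht [K1 K2]]]; simpl in K1, K2.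
  apply (proj2 (He0 t) Ht); auto; lra.
Qed.

(** * Developable strips *)

Lemma vsmooth2_is_vderive_u U F u v : vsmooth2_on U F -> U u v -> is_vderive (fun t => F t v) u (pu F u v).
Proof.
  intros [[_ H1] [[_ H2] [_ H3]]] Huv; split3; apply Derive_correct;
    [exact (proj1 (H1 nil u v Huv))|exact (proj1 (H2 nil u v Huv))|exact (proj1 (H3 nil u v Huv))].
Qed.

(* With [N = 0] the numerator of [K] is [- M^2], and [M] is proportional to [det3 fu fv X]. *)
Lemma det3_zero_of_flat fu fv X L : cross fu fv <> vzero ->
  (L * dot vzero (vscale (/ vnorm (cross fu fv)) (cross fu fv))
   - dot X (vscale (/ vnorm (cross fu fv)) (cross fu fv))
     * dot X (vscale (/ vnorm (cross fu fv)) (cross fu fv)))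
  / (dot fu fu * dot fv fv - dot fu fv * dot fu fv) = 0 ->
  det3 fu fv X = 0.
Proof.
  intros Hx H; set (n := cross fu fv) in *.
  assert (Hnn : 0 < dot n n) by (apply dot_self_pos, Hx).
  assert (Hn : 0 < vnorm n) by (apply sqrt_lt_R0, Hnn).
  replace (dot fu fu * dot fv fv - dot fu fv * dot fu fv) with (dot n n) in H by (unfold n; vring).
  replace (dot vzero (vscale (/ vnorm n) n)) with 0 in H by vring.
  replace (dot X (vscale (/ vnorm n) n)) with (/ vnorm n * det3 fu fv X) in H by (unfold n; vring).
  assert (E : (/ vnorm n * det3 fu fv X) * (/ vnorm n * det3 fu fv X) = 0).
  { apply (Rmult_eq_compat_r (dot n n)) in H; unfold Rdiv in H.
    rewrite Rmult_assoc, Rinv_l in H by lra; lra. }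
  assert (Hi : / vnorm n <> 0) by (apply Rinv_neq_0_compat; lra).
  apply Rmult_integral in E; destruct E as [E|E]; apply Rmult_integral in E; tauto.
Qed.

Section RuledStrip.
Variables (g xi : R -> vec) (F : R -> R -> vec) (U : R -> R -> Prop) (s e : R).
Hypotheses (Hsm : vsmooth2_on U F)
  (Hrep : forall s v, U s v -> F s v = vadd (g s) (vscale v (xi s)))
  (He : 0 < e) (Hball : forall u v, Rabs (u - s) < e -> Rabs v < e -> U u v).

Let Hs0 : U s 0.
Proof. apply Hball; rewrite ?Rminus_diag, Rabs_R0; auto. Qed.

Lemma strip_directrix_is_vderive : is_vderive g s (pu F s 0).
Proof.
  apply (is_vderive_ext_loc (fun t => F t 0)); [|exact (vsmooth2_is_vderive_u U F s 0 Hsm Hs0)].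
  apply (locally_Rabs _ _ e He); intros t Ht.
  rewrite Hrep by (apply Hball; rewrite ?Rabs_R0; auto); vring.
Qed.

Lemma strip_ruling_is_vderive : is_vderive xi s (vderive xi s).
Proof.
  set (v0 := e / 2).
  assert (Hv0e : Rabs v0 < e) by (unfold v0; rewrite Rabs_right; lra).
  assert (Hv0 : U s v0) by (apply Hball; rewrite ?Rminus_diag, ?Rabs_R0; auto).
  assert (H : is_vderive xi s (vscale (/ v0) (vsub (pu F s v0) (pu F s 0)))).
  { apply (is_vderive_ext_loc (fun t => vscale (/ v0) (vsub (F t v0) (F t 0)))).
    - apply (locally_Rabs _ _ e He); intros t Ht.
      rewrite (Hrep t v0), (Hrep t 0) by (apply Hball; rewrite ?Rabs_R0; auto).
      apply vec_ext; vexpand; field; unfold v0; lra.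
    - exact (is_vderive_scal _ _ _ _ (is_vderive_sub _ _ _ _ _
               (vsmooth2_is_vderive_u U F s v0 Hsm Hv0) (vsmooth2_is_vderive_u U F s 0 Hsm Hs0))). }
  rewrite (is_vderive_unique _ _ _ H); exact H.
Qed.

Lemma strip_pv_loc : locally 0 (fun t => pv F s t = xi s).
Proof.
  apply (locally_Rabs _ _ e He); intros t Ht; rewrite Rminus_0_r in Ht.
  unfold pv; apply is_vderive_unique.
  apply (is_vderive_ext_loc (fun t' => vadd (g s) (vscale t' (xi s)))); [|apply is_vderive_line].
  apply (locally_Rabs _ _ (e - Rabs t)); [lra|]; intros t' Ht'.
  rewrite Hrep; [reflexivity|]; apply Hball; [rewrite Rminus_diag, Rabs_R0; auto|].
  replace t' with ((t' - t) + t) by ring; pose proof (Rabs_triang (t' - t) t); lra.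
Qed.

Lemma strip_pv0 : pv F s 0 = xi s.
Proof. destruct strip_pv_loc as [d Hd]; apply Hd, ball_center. Qed.

Lemma strip_pu_loc : locally 0 (fun t => pu F s t = vadd (vderive g s) (vscale t (vderive xi s))).
Proof.
  apply (locally_Rabs _ _ e He); intros t Ht; rewrite Rminus_0_r in Ht.
  unfold pu; apply is_vderive_unique.
  rewrite (is_vderive_unique _ _ _ strip_directrix_is_vderive).
  apply (is_vderive_ext_loc (fun u => vadd (g u) (vscale t (xi u))));
    [|exact (is_vderive_add _ _ _ _ _ strip_directrix_is_vderive
               (is_vderive_scal t _ _ _ strip_ruling_is_vderive))].
  apply (locally_Rabs _ _ e He); intros u Hu; rewrite Hrep by (apply Hball; auto); reflexivity.
Qed.

Lemma strip_developable :
  cross (pu F s 0) (pv F s 0) <> vzero -> gauss_curv F s 0 = 0 ->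
  det3 (vderive g s) (xi s) (vderive xi s) = 0.
Proof.
  intros Himm Hgc.
  assert (Hpvv : pv (pv F) s 0 = vzero).
  { unfold pv at 1; apply is_vderive_unique.
    apply (is_vderive_ext_loc (fun _ => xi s)); [|apply is_vderive_const].
    apply (filter_imp _ _ (fun t H => eq_sym H) strip_pv_loc). }
  assert (Hpuv : pv (pu F) s 0 = vderive xi s).
  { unfold pv at 1; apply is_vderive_unique.
    apply (is_vderive_ext_loc (fun t => vadd (vderive g s) (vscale t (vderive xi s))));
      [|apply is_vderive_line].
    apply (filter_imp _ _ (fun t H => eq_sym H) strip_pu_loc). }
  assert (Hpu0 : pu F s 0 = vderive g s)
    by (symmetry; apply is_vderive_unique, strip_directrix_is_vderive).
  unfold gauss_curv in Hgc; cbv zeta in Hgc.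
  rewrite Hpvv, Hpuv, Hpu0, strip_pv0 in Hgc; rewrite Hpu0, strip_pv0 in Himm.
  exact (det3_zero_of_flat _ _ _ _ Himm Hgc).
Qed.
End RuledStrip.

Lemma developable_strip_facts g xi F U s : open2 U -> vsmooth2_on U F ->
  (forall s v, U s v -> cross (pu F s v) (pv F s v) <> vzero) ->
  (forall s v, U s v -> F s v = vadd (g s) (vscale v (xi s))) ->
  (forall s v, U s v -> gauss_curv F s v = 0) -> U s 0 ->
  is_vderive g s (vderive g s) /\ is_vderive xi s (vderive xi s) /\ pv F s 0 = xi s /\
  det3 (vderive g s) (xi s) (vderive xi s) = 0.
Proof.
  intros HU Hsm Himm Hrep Hgc Hs.
  destruct (HU s 0 Hs) as [e [He Hb]].
  assert (Hball : forall u v, Rabs (u - s) < e -> Rabs v < e -> U u v)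
    by (intros u v Hu Hv; apply Hb; rewrite ?Rminus_0_r; auto).
  pose proof (strip_directrix_is_vderive g xi F U s e Hsm Hrep He Hball) as Hg.
  split; [rewrite (is_vderive_unique _ _ _ Hg); exact Hg|].
  split; [exact (strip_ruling_is_vderive g xi F U s e Hsm Hrep He Hball)|].
  split; [exact (strip_pv0 g xi F U s e Hrep He Hball)|].
  exact (strip_developable g xi F U s e Hsm Hrep He Hball (Himm s 0 Hs) (Hgc s 0 Hs)).
Qed.

(** * Orthogonal maps preserving the curve *)

Lemma Iv_of_Rabs_lt l s : Rabs s < l / 2 -> Iv l s.
Proof. intros H; destruct (Rabs_def2 _ _ H); unfold Iv; lra. Qed.

Lemma Iv_interior_dense l s d : 0 < l -> Iv l s -> 0 < d ->
  exists t, Rabs t < l / 2 /\ Rabs (t - s) < d.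
Proof.
  intros Hl Hs Hd; set (m := Rmin d l / l).
  assert (Hm : 0 < m <= 1).
  { unfold m; split; [apply Rdiv_lt_0_compat; [apply Rmin_glb_lt|]; lra|].
    apply (Rmult_le_reg_r l); [lra|]; unfold Rdiv; rewrite Rmult_assoc, Rinv_l, Rmult_1_r, Rmult_1_l by lra.
    apply Rmin_r. }
  assert (Hsl : Rabs s <= l / 2) by (unfold Iv in Hs; apply Rabs_le; lra).
  exists (s * (1 - m)); split.
  - rewrite Rabs_mult, (Rabs_right (1 - m)) by lra.
    destruct (Req_dec s 0) as [->|Hs0]; [rewrite Rabs_R0; lra|].
    pose proof (Rabs_pos_lt s Hs0); nra.
  - replace (s * (1 - m) - s) with (- (s * m)) by ring.
    rewrite Rabs_Ropp, Rabs_mult, (Rabs_right m) by lra.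
    assert (Hml : m * l = Rmin d l) by (unfold m; field; lra).
    pose proof (Rmin_l d l); pose proof (Rabs_pos s); nra.
Qed.

Definition Iv_continuous_at l (f : R -> R) s : Prop :=
  forall eps, 0 < eps -> exists d, 0 < d /\
    forall t, Iv l t -> Rabs (t - s) < d -> Rabs (f t - f s) < eps.

Lemma Iv_continuous_of_continuity_pt l f s : continuity_pt f s -> Iv_continuous_at l f s.
Proof.
  intros H eps He; destruct (continuity_pt_eps f s H eps He) as [d [Hd K]]; exists d; auto.
Qed.

Lemma Iv_eq_of_interior_eq l (f g : R -> R) s : 0 < l -> Iv l s ->
  Iv_continuous_at l f s -> Iv_continuous_at l g s ->
  (forall t, Rabs t < l / 2 -> f t = g t) -> f s = g s.
Proof.
  intros Hl Hs Hf Hg Heq.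
  apply Rminus_diag_uniq, Rabs_eq_0, Rle_antisym; [|apply Rabs_pos].
  apply Rnot_lt_le; intros Hp; set (D := Rabs (f s - g s)) in *.
  destruct (Hf (D / 2)) as [d1 [H1 K1]]; [lra|].
  destruct (Hg (D / 2)) as [d2 [H2 K2]]; [lra|].
  destruct (Iv_interior_dense l s (Rmin d1 d2) Hl Hs) as [t [Ht Hts]]; [apply Rmin_glb_lt; auto|].
  pose proof (Rmin_l d1 d2); pose proof (Rmin_r d1 d2).
  specialize (K1 t (Iv_of_Rabs_lt _ _ Ht) ltac:(lra)); specialize (K2 t (Iv_of_Rabs_lt _ _ Ht) ltac:(lra)).
  rewrite Heq in K1 by exact Ht.
  assert (D <= Rabs (g t - f s) + Rabs (g t - g s)).
  { unfold D; replace (f s - g s) with (- (g t - f s) + (g t - g s)) by ring.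
    eapply Rle_trans; [apply Rabs_triang|]; rewrite Rabs_Ropp; lra. }
  lra.
Qed.

Lemma Rabs_dot_linmap_le u f1 f2 f3 r K : dot u u = 1 -> orthonormal f1 f2 f3 ->
  Rabs (vx r) <= K -> Rabs (vy r) <= K -> Rabs (vz r) <= K ->
  Rabs (dot u (linmap f1 f2 f3 r)) <= 3 * K.
Proof.
  intros Hu [H1 H2 H3 _ _ _] Hx Hy Hz.
  replace (dot u (linmap f1 f2 f3 r)) with (dot (mkv (dot u f1) (dot u f2) (dot u f3)) r) by vring.
  pose proof (Rabs_dot_unit u f1 Hu H1); pose proof (Rabs_dot_unit u f2 Hu H2);
    pose proof (Rabs_dot_unit u f3 Hu H3).
  assert (0 <= K) by (pose proof (Rabs_pos (vx r)); lra).
  pose proof (Rabs_dot_le (mkv (dot u f1) (dot u f2) (dot u f3)) r K ltac:(lra) Hx Hy Hz) as B.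
  unfold l1norm in B; change (vx (mkv ?a _ _)) with a in B; change (vy (mkv _ ?a _)) with a in B;
    change (vz (mkv _ _ ?a)) with a in B; nra.
Qed.

Lemma Rabs_sub_le_of_perturbed_eq a p q h lam eta : a + p = h * lam + q ->
  Rabs p <= 3 * eta * Rabs a -> Rabs q <= 3 * eta * Rabs h -> Rabs lam <= 1 -> 0 < eta <= 1 / 12 ->
  Rabs (a - h * lam) <= 9 * eta * Rabs h.
Proof.
  intros E Hp Hq Hl He.
  assert (B1 : Rabs (a - h * lam) <= Rabs q + Rabs p).
  { replace (a - h * lam) with (q - p) by lra; unfold Rminus.
    eapply Rle_trans; [apply Rabs_triang|]; rewrite Rabs_Ropp; lra. }
  assert (B2 : Rabs (h * lam) <= Rabs h)
    by (rewrite Rabs_mult; pose proof (Rabs_pos h); pose proof (Rabs_pos lam); nra).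
  assert (B3 : Rabs a <= Rabs (h * lam) + Rabs (a - h * lam))
    by (replace a with (h * lam + (a - h * lam)) at 1 by ring; apply Rabs_triang).
  assert (B4 : Rabs a <= 2 * Rabs h) by (pose proof (Rabs_pos h); pose proof (Rabs_pos a); nra).
  pose proof (Rabs_pos h); nra.
Qed.

Lemma Rabs_lt_between_0 t r : Rabs t < r -> forall x, Rmin 0 t <= x <= Rmax 0 t -> Rabs x < r.
Proof.
  intros Ht x Hx; unfold Rmin, Rmax in Hx; apply Rabs_def1;
    destruct (Rle_dec 0 t); destruct (Rabs_def2 _ _ Ht); lra.
Qed.

Lemma sqr_one_continuous_eq f a b : a <= b ->
  (forall x, a <= x <= b -> continuity_pt f x) -> (forall x, a <= x <= b -> f x * f x = 1) ->
  f a = f b.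
Proof.
  intros Hab Hc Hsq; destruct (Req_dec (f a) (f b)) as [|Hne]; [assumption|exfalso].
  pose proof (Hsq a ltac:(lra)); pose proof (Hsq b ltac:(lra)).
  assert (Hb : f b = - f a) by nra.
  destruct (Ranalysis5.IVT_interv (fun x => - (f x * f a)) a b) as [z [Hz Hfz]].
  - intros x Hx; apply continuity_pt_opp, continuity_pt_mult; [apply Hc; lra|].
    apply continuity_pt_const; intros ? ?; reflexivity.
  - destruct Hab as [|E]; [assumption|subst; contradiction].
  - cbv beta; nra.
  - cbv beta; rewrite Hb; nra.
  - pose proof (Hsq z Hz); cbv beta in Hfz; nra.
Qed.

Section CurveSelfMap.
Variables (l : R) (c : R -> vec) (f1 f2 f3 b : vec) (psi : R -> R).
Local Notation A := (linmap f1 f2 f3).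
Local Notation lam s := (dot (vderive c (psi s)) (A (vderive c s))).
Hypotheses (Hl : 0 < l) (Hon : orthonormal f1 f2 f3)
  (Hdc : forall t, Iv l t -> is_vderive c t (vderive c t))
  (Hdc2 : forall t, Iv l t -> is_vderive (vderive c) t (vderive (vderive c) t))
  (Hunit : forall t, Iv l t -> dot (vderive c t) (vderive c t) = 1)
  (Hinj : forall s t, Iv l s -> Iv l t -> c s = c t -> s = t)
  (Hpsi : forall s, Iv l s -> Iv l (psi s) /\ c (psi s) = vadd b (A (c s))).

Lemma self_map_continuous s : Iv l s -> Iv_continuous_at l psi s.
Proof.
  intros Hs eps He.
  destruct (curve_separated l c Hdc Hinj (psi s) eps (proj1 (Hpsi s Hs)) He) as [m [Hm Km]].
  destruct (continuity_pt_eps _ _ (continuity_pt_dist_sq c s _ (c s) (Hdc s Hs)) m Hm) as [d [Hd Kd]].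
  exists d; split; [exact Hd|]; intros t Ht Hts; apply Rnot_le_lt; intros Hge.
  specialize (Km (psi t) (proj1 (Hpsi t Ht)) Hge); specialize (Kd t Hts).
  rewrite (proj2 (Hpsi s Hs)), (proj2 (Hpsi t Ht)) in Km.
  replace (vsub (vadd b (A (c t))) (vadd b (A (c s)))) with (A (vsub (c t) (c s))) in Km by vring.
  rewrite dot_linmap in Km by exact Hon.
  replace (dot (vsub (c s) (c s)) (vsub (c s) (c s))) with 0 in Kd by vring.
  rewrite Rminus_0_r, Rabs_right in Kd by apply Rle_ge, dot_ge0; lra.
Qed.

Lemma self_map_continuity_pt s : Rabs s < l / 2 -> continuity_pt psi s.
Proof.
  intros Hs; apply continuity_pt_locally; intros eps.
  destruct (self_map_continuous s (Iv_of_Rabs_lt _ _ Hs) eps (cond_pos eps)) as [d [Hd K]].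
  destruct (locally_Rabs_inv _ _ (locally_Rabs_lt s (l / 2) Hs)) as [d' [Hd' K']].
  apply (locally_Rabs _ _ (Rmin d d')); [apply Rmin_glb_lt; auto|]; intros t Ht.
  pose proof (Rmin_l d d'); pose proof (Rmin_r d d').
  apply K; [apply Iv_of_Rabs_lt, K'|]; lra.
Qed.

(* Project [c (psi t) - c (psi s) = A (c t - c s)] on the unit vector [c' (psi s)],
   after expanding both sides to first order. *)
Lemma self_map_increment s t : Iv l s -> Iv l t ->
  let u := vderive c (psi s) in
  psi t - psi s + dot u (vremainder c (psi s) u (psi t)) =
  (t - s) * lam s + dot u (A (vremainder c s (vderive c s) t)).
Proof.
  intros Hs Ht; cbv zeta; set (u := vderive c (psi s)).
  assert (Huu : dot u u = 1) by (apply Hunit, (proj1 (Hpsi s Hs))).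
  assert (EqV : vadd (vscale (psi t - psi s) u) (vremainder c (psi s) u (psi t)) =
                vadd (vscale (t - s) (A (vderive c s))) (A (vremainder c s (vderive c s) t)))
    by (unfold vremainder; rewrite (proj2 (Hpsi t Ht)), (proj2 (Hpsi s Hs)); vring).
  apply (f_equal (dot u)) in EqV.
  replace (dot u (vadd (vscale (psi t - psi s) u) (vremainder c (psi s) u (psi t))))
    with ((psi t - psi s) * dot u u + dot u (vremainder c (psi s) u (psi t))) in EqV by vring.
  replace (dot u (vadd (vscale (t - s) (A (vderive c s))) (A (vremainder c s (vderive c s) t))))
    with ((t - s) * dot u (A (vderive c s)) + dot u (A (vremainder c s (vderive c s) t))) in EqV by vring.
  rewrite Huu in EqV; lra.
Qed.

Lemma self_map_is_derive s : Rabs s < l / 2 -> is_derive psi s (lam s).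
Proof.
  intros Hs; assert (Ivs : Iv l s) by (apply Iv_of_Rabs_lt, Hs).
  pose proof (proj1 (Hpsi s Ivs)) as Ivps.
  assert (Huu : dot (vderive c (psi s)) (vderive c (psi s)) = 1) by (apply Hunit, Ivps).
  apply is_derive_Reals; intros eps Heps.
  set (eta := Rmin (1 / 12) (eps / 18)).
  assert (Heta : 0 < eta <= 1 / 12) by (split; [apply Rmin_glb_lt|apply Rmin_l]; lra).
  assert (Heta2 : eta <= eps / 18) by apply Rmin_r.
  destruct (is_vderive_remainder c (psi s) _ (Hdc _ Ivps) eta ltac:(lra)) as [d1 [P1 K1]].
  destruct (is_vderive_remainder c s _ (Hdc _ Ivs) eta ltac:(lra)) as [d2 [P2 K2]].
  destruct (self_map_continuous s Ivs d1 P1) as [dc [Pc Kc]].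
  assert (Pd : 0 < Rmin d2 (Rmin dc (l / 2 - Rabs s))) by (repeat apply Rmin_glb_lt; lra).
  exists (mkposreal _ Pd); intros h Hh Hhd; simpl in Hhd.
  pose proof (Rmin_l d2 (Rmin dc (l / 2 - Rabs s))); pose proof (Rmin_r d2 (Rmin dc (l / 2 - Rabs s)));
    pose proof (Rmin_l dc (l / 2 - Rabs s)); pose proof (Rmin_r dc (l / 2 - Rabs s)).
  assert (Ivt : Iv l (s + h)) by (apply Iv_of_Rabs_lt; pose proof (Rabs_triang s h); lra).
  pose proof (self_map_increment s (s + h) Ivs Ivt) as EqS; cbv zeta in EqS.
  replace (s + h - s) with h in EqS by ring.
  assert (HD : Rabs (psi (s + h) - psi s) < d1) by (apply Kc; auto; replace (s + h - s) with h by ring; lra).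
  destruct (K1 (psi (s + h)) HD) as (A1 & A2 & A3).
  destruct (K2 (s + h)) as (B1 & B2 & B3); replace (s + h - s) with h in * by ring; [lra|].
  pose proof (Rabs_sub_le_of_perturbed_eq _ _ _ h (lam s) eta EqS) as Fin.
  apply (Rle_lt_trans _ (9 * eta)); [|lra].
  replace ((psi (s + h) - psi s) / h - lam s) with ((psi (s + h) - psi s - h * lam s) / h) by (field; auto).
  unfold Rdiv; rewrite Rabs_mult, Rabs_inv.
  assert (Hph : 0 < Rabs h) by (apply Rabs_pos_lt; auto).
  apply (Rmult_le_reg_r (Rabs h)); [exact Hph|].
  rewrite Rmult_assoc, Rinv_l, Rmult_1_r by lra.
  apply Fin; [rewrite Rmult_assoc; apply Rabs_dot_unit_le; auto; apply Rmult_le_pos, Rabs_pos; lra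
             |rewrite Rmult_assoc; apply Rabs_dot_linmap_le; auto
             |apply Rabs_dot_unit; [exact Huu|rewrite dot_linmap by exact Hon; apply Hunit, Ivs]
             |exact Heta].
Qed.

Lemma self_map_chain s : Rabs s < l / 2 -> vscale (lam s) (vderive c (psi s)) = A (vderive c s).
Proof.
  intros Hs; assert (Ivs : Iv l s) by (apply Iv_of_Rabs_lt, Hs).
  destruct (Hdc (psi s) (proj1 (Hpsi s Ivs))) as (D1 & D2 & D3).
  pose proof (self_map_is_derive s Hs) as Hd.
  assert (V1 : is_vderive (fun t => c (psi t)) s (vscale (lam s) (vderive c (psi s))))
    by (split3; [exact (is_derive_comp _ psi s _ _ D1 Hd)|exact (is_derive_comp _ psi s _ _ D2 Hd)
                |exact (is_derive_comp _ psi s _ _ D3 Hd)]).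
  assert (Hloc : locally s (fun t => c (psi t) = vadd b (A (c t))))
    by (apply (filter_imp _ _ (fun t Ht => proj2 (Hpsi t (Iv_of_Rabs_lt _ _ Ht))) (locally_Rabs_lt s _ Hs))).
  rewrite <- (is_vderive_unique _ _ _ (is_vderive_ext_loc _ _ _ _ Hloc V1)).
  apply is_vderive_unique, is_vderive_affine, Hdc, Ivs.
Qed.

Lemma self_map_speed_sq s : Rabs s < l / 2 -> lam s * lam s = 1.
Proof.
  intros Hs; assert (Ivs : Iv l s) by (apply Iv_of_Rabs_lt, Hs).
  pose proof (f_equal (fun p => dot p p) (self_map_chain s Hs)) as E; cbv beta in E.
  rewrite dot_linmap, (Hunit s Ivs) in E by exact Hon.
  replace (dot (vscale (lam s) (vderive c (psi s))) (vscale (lam s) (vderive c (psi s))))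
    with (lam s * lam s * dot (vderive c (psi s)) (vderive c (psi s))) in E by vring.
  rewrite (Hunit _ (proj1 (Hpsi s Ivs))) in E; lra.
Qed.

Lemma self_map_speed_continuity_pt s : Rabs s < l / 2 -> continuity_pt (fun t => lam t) s.
Proof.
  intros Hs; assert (Ivs : Iv l s) by (apply Iv_of_Rabs_lt, Hs).
  apply continuity_pt_dot.
  - apply vcont_comp; [apply self_map_continuity_pt, Hs|].
    exact (is_vderive_vcont _ _ _ (Hdc2 _ (proj1 (Hpsi s Ivs)))).
  - apply vcont_linmap; exact (is_vderive_vcont _ _ _ (Hdc2 s Ivs)).
Qed.

Lemma self_map_speed_const t : Rabs t < l / 2 -> lam t = lam 0.
Proof.
  intros Ht.
  pose proof (Rabs_lt_between_0 t (l / 2) Ht) as Hin.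
  assert (E : (fun t => lam t) (Rmin 0 t) = (fun t => lam t) (Rmax 0 t)).
  { apply (sqr_one_continuous_eq (fun t => lam t)); [apply Rmin_Rmax|..]; intros x Hx;
      [apply self_map_speed_continuity_pt|apply self_map_speed_sq]; apply Hin, Hx. }
  unfold Rmin, Rmax in E; destruct (Rle_dec 0 t); cbv beta in E; auto.
Qed.

Lemma self_map_affine_interior t : Rabs t < l / 2 -> psi t = lam 0 * t + psi 0.
Proof.
  intros Ht.
  pose proof (Rabs_lt_between_0 t (l / 2) Ht) as Hin.
  assert (Hd : forall x, Rabs x < l / 2 -> is_derive (fun y => psi y - lam 0 * y) x 0).
  { intros x Hx.
    pose proof (is_derive_minus _ _ x _ _ (self_map_is_derive x Hx)
                  (is_derive_scal _ x (lam 0) _ (is_derive_id x))) as H.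
    rewrite (self_map_speed_const x Hx) in H.
    refine (eq_ind _ (is_derive (fun y => psi y - lam 0 * y) x) H 0 _).
    unfold minus, plus, opp, one; simpl; ring. }
  destruct (MVT_gen (fun y => psi y - lam 0 * y) 0 t (fun _ => 0)) as [z [_ Hz]].
  - intros x Hx; apply Hd, Hin; lra.
  - intros x Hx; exact (is_derive_continuity_pt _ _ _ (Hd x (Hin x Hx))).
  - cbv beta in Hz; lra.
Qed.

Lemma self_map_affine t : Iv l t -> psi t = lam 0 * t + psi 0.
Proof.
  intros Ht; apply (Iv_eq_of_interior_eq l psi (fun t => lam 0 * t + psi 0) t Hl Ht).
  - apply self_map_continuous, Ht.
  - apply Iv_continuous_of_continuity_pt.
    apply continuity_pt_plus; [apply continuity_pt_scal, continuity_pt_id|apply continuity_pt_const].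
    intros ? ?; reflexivity.
  - exact self_map_affine_interior.
Qed.

Lemma self_map_param_at_0 : (lam 0 = 1 \/ lam 0 = -1) /\ psi 0 = 0.
Proof.
  assert (H0 : Rabs 0 < l / 2) by (rewrite Rabs_R0; lra).
  pose proof (self_map_speed_sq 0 H0) as Hsq.
  assert (Hl0 : lam 0 = 1 \/ lam 0 = -1) by (apply Rsqr_eq; unfold Rsqr; lra).
  split; [exact Hl0|].
  assert (I1 : Iv l (l / 2)) by (unfold Iv; lra); assert (I2 : Iv l (- (l / 2))) by (unfold Iv; lra).
  pose proof (proj1 (Hpsi _ I1)) as J1; pose proof (proj1 (Hpsi _ I2)) as J2.
  rewrite self_map_affine in J1, J2 by assumption; unfold Iv in J1, J2.
  destruct Hl0 as [E|E]; rewrite E in J1, J2; lra.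
Qed.
End CurveSelfMap.

Lemma curve_self_map_param l c U f1 f2 f3 b :
  0 < l -> vsmooth1_on U c -> (forall s, Iv l s -> U s) ->
  (forall s, Iv l s -> dot (vderive c s) (vderive c s) = 1) ->
  (forall s t, Iv l s -> Iv l t -> c s = c t -> s = t) ->
  orthonormal f1 f2 f3 ->
  (forall s, Iv l s -> exists t, Iv l t /\ vadd b (linmap f1 f2 f3 (c s)) = c t) ->
  exists lam0, (lam0 = 1 \/ lam0 = -1) /\
    forall s, Iv l s -> vadd b (linmap f1 f2 f3 (c s)) = c (lam0 * s).
Proof.
  intros Hl Hsm HU Hunit Hinj Hon HC.
  set (P := fun s t => Iv l t /\ vadd b (linmap f1 f2 f3 (c s)) = c t).
  set (psi := fun s => epsilon (inhabits 0) (P s)).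
  assert (Hpsi : forall s, Iv l s -> Iv l (psi s) /\ c (psi s) = vadd b (linmap f1 f2 f3 (c s))).
  { intros s Hs; destruct (epsilon_spec (inhabits 0) (P s) (HC s Hs)) as [K1 K2]; auto. }
  assert (Hdc : forall t, Iv l t -> is_vderive c t (vderive c t))
    by (intros; eapply vsmooth1_is_vderive; eauto).
  assert (Hdc2 : forall t, Iv l t -> is_vderive (vderive c) t (vderive (vderive c) t))
    by (intros; eapply vsmooth1_is_vderive2; eauto).
  destruct (self_map_param_at_0 l c f1 f2 f3 b psi Hl Hon Hdc Hdc2 Hunit Hinj Hpsi) as [Hl0 H0].
  eexists; split; [exact Hl0|]; intros s Hs.
  rewrite <- (proj2 (Hpsi s Hs)),
    (self_map_affine l c f1 f2 f3 b psi Hl Hon Hdc Hdc2 Hunit Hinj Hpsi s Hs), H0.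
  f_equal; ring.
Qed.

(* Each row of [A - I] is orthogonal to [C] up to a constant, hence vanishes. *)
Lemma affine_fixing_nonplanar_id l c f1 f2 f3 b : 0 < l ->
  ~ (exists (m : vec) (d : R), m <> vzero /\ forall s, Iv l s -> dot m (c s) = d) ->
  (forall s, Iv l s -> vadd b (linmap f1 f2 f3 (c s)) = c s) ->
  forall p, vadd b (linmap f1 f2 f3 p) = p.
Proof.
  intros Hl Hnp Hfix.
  assert (Row : forall m d, (forall s, Iv l s -> dot m (c s) = d) -> m = vzero)
    by (intros m d Hm; apply NNPP; intros Hne; apply Hnp; exists m, d; auto).
  assert (Rx : mkv (vx f1 - 1) (vx f2) (vx f3) = vzero).
  { apply (Row _ (- vx b)); intros s Hs; pose proof (f_equal vx (Hfix s Hs)) as E.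
    vexpand_in E; vexpand; lra. }
  assert (Ry : mkv (vy f1) (vy f2 - 1) (vy f3) = vzero).
  { apply (Row _ (- vy b)); intros s Hs; pose proof (f_equal vy (Hfix s Hs)) as E.
    vexpand_in E; vexpand; lra. }
  assert (Rz : mkv (vz f1) (vz f2) (vz f3 - 1) = vzero).
  { apply (Row _ (- vz b)); intros s Hs; pose proof (f_equal vz (Hfix s Hs)) as E.
    vexpand_in E; vexpand; lra. }
  assert (Hb : vadd b (linmap f1 f2 f3 (c 0)) = c 0) by (apply Hfix; unfold Iv; lra).
  revert Hb; generalize (c 0); intros c0 Hb p.
  destruct b as [[b1 b2] b3], f1 as [[a11 a21] a31], f2 as [[a12 a22] a32], f3 as [[a13 a23] a33].
  destruct c0 as [[x y] z], p as [[p1 p2] p3].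
  vexpand_in Rx; vexpand_in Ry; vexpand_in Rz; vexpand_in Hb.
  injection Rx; injection Ry; injection Rz; injection Hb; intros.
  vexpand; f_equal; [f_equal|]; nra.
Qed.

(** * The tangent plane argument *)

(* Dotting with [et] bounds [s] by [4 v]; dotting with [q] leaves only the small terms. *)
Lemma tangent_plane_estimate et w q x x0 r s v om eta :
  dot et et = 1 -> dot w w = 1 -> dot x x = 1 -> dot q et = 0 -> dot q x0 = 0 ->
  vscale v w = vadd (vadd (vscale s et) r) (vscale om x) ->
  0 < v -> Rabs om < 2 * v -> 0 < eta <= 1 / 12 ->
  Rabs (vx r) <= eta * Rabs s -> Rabs (vy r) <= eta * Rabs s -> Rabs (vz r) <= eta * Rabs s ->
  Rabs (vx (vsub x x0)) <= eta -> Rabs (vy (vsub x x0)) <= eta -> Rabs (vz (vsub x x0)) <= eta ->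
  Rabs (dot q w) <= 6 * l1norm q * eta.
Proof.
  intros Het Hw Hx Hqe Hqx EqV Hv Hom Heta R1 R2 R3 X1 X2 X3.
  pose proof (l1norm_ge0 q); pose proof (Rabs_pos s); pose proof (Rabs_pos om).
  assert (EqE : v * dot et w = s + dot et r + om * dot et x).
  { apply (f_equal (dot et)) in EqV.
    replace (dot et (vscale v w)) with (v * dot et w) in EqV by vring.
    replace (dot et (vadd (vadd (vscale s et) r) (vscale om x)))
      with (s * dot et et + dot et r + om * dot et x) in EqV by vring.
    rewrite Het in EqV; lra. }
  assert (EqQ : v * dot q w = dot q r + om * dot q (vsub x x0)).
  { apply (f_equal (dot q)) in EqV.
    replace (dot q (vscale v w)) with (v * dot q w) in EqV by vring.
    replace (dot q (vadd (vadd (vscale s et) r) (vscale om x)))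
      with (s * dot q et + dot q r + om * dot q x) in EqV by vring.
    replace (dot q (vsub x x0)) with (dot q x - dot q x0) by vring.
    rewrite Hqe in EqV; rewrite Hqx; lra. }
  assert (Bs : Rabs s <= 4 * v).
  { assert (Ber : Rabs (dot et r) <= 3 * (eta * Rabs s))
      by (apply Rabs_dot_unit_le; auto; apply Rmult_le_pos; lra).
    pose proof (Rabs_dot_unit et w Het Hw); pose proof (Rabs_dot_unit et x Het Hx).
    assert (Hs3 : Rabs s <= Rabs (v * dot et w) + Rabs (dot et r) + Rabs (om * dot et x)).
    { replace s with (v * dot et w - dot et r - om * dot et x) at 1 by lra; unfold Rminus.
      eapply Rle_trans; [apply Rabs_triang|]; rewrite Rabs_Ropp.
      apply Rplus_le_compat_r; eapply Rle_trans; [apply Rabs_triang|]; rewrite Rabs_Ropp; lra. }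
    rewrite !Rabs_mult, (Rabs_right v) in Hs3 by lra.
    pose proof (Rabs_pos (dot et w)); pose proof (Rabs_pos (dot et x)); nra. }
  assert (Bqr : Rabs (dot q r) <= l1norm q * (eta * Rabs s))
    by (apply Rabs_dot_le; auto; apply Rmult_le_pos; lra).
  assert (Bqx : Rabs (dot q (vsub x x0)) <= l1norm q * eta) by (apply Rabs_dot_le; auto; lra).
  apply (Rmult_le_reg_l v); [exact Hv|].
  rewrite <- (Rabs_right v) at 1 by lra; rewrite <- Rabs_mult, EqQ.
  eapply Rle_trans; [apply Rabs_triang|]; rewrite Rabs_mult.
  pose proof (Rabs_pos (dot q (vsub x x0))).
  assert (Rabs om * Rabs (dot q (vsub x x0)) <= 2 * v * (l1norm q * eta)) by nra.
  assert (l1norm q * (eta * Rabs s) <= l1norm q * (eta * (4 * v))) by (apply Rmult_le_compat_l; nra).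
  nra.
Qed.

Lemma eq0_of_Rabs_le_small a K : 0 <= K -> (forall eta, 0 < eta <= 1 / 12 -> Rabs a <= K * eta) -> a = 0.
Proof.
  intros HK H; destruct (Req_dec a 0) as [|Hne]; [assumption|exfalso].
  pose proof (Rabs_pos_lt a Hne) as Ha.
  set (eta := Rmin (1 / 12) (Rabs a / (K + 1))).
  assert (He : 0 < eta <= 1 / 12) by (split; [apply Rmin_glb_lt; [|apply Rdiv_lt_0_compat]|apply Rmin_l]; lra).
  assert (He2 : eta * (K + 1) <= Rabs a).
  { pose proof (Rmin_r (1 / 12) (Rabs a / (K + 1))) as Hm.
    apply (Rmult_le_compat_r (K + 1)) in Hm; [|lra]; fold eta in Hm.
    replace (Rabs a / (K + 1) * (K + 1)) with (Rabs a) in Hm by (field; lra); lra. }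
  specialize (H eta He); nra.
Qed.

Lemma dist_sq_segment_le w x v om : dot w w = 1 -> dot x x = 1 -> 0 < v -> Rabs om < 2 * v ->
  dot (vsub (vscale v w) (vscale om x)) (vsub (vscale v w) (vscale om x)) <= 9 * (v * v).
Proof.
  intros Hw Hx Hv Hom.
  replace (dot (vsub (vscale v w) (vscale om x)) (vsub (vscale v w) (vscale om x)))
    with (v * v * dot w w - 2 * (v * om * dot w x) + om * om * dot x x) by vring.
  rewrite Hw, Hx.
  pose proof (Rabs_dot_unit w x Hw Hx); pose proof (Rabs_pos om); pose proof (Rabs_pos (dot w x)).
  assert (B : Rabs (v * om * dot w x) <= v * Rabs om)
    by (rewrite !Rabs_mult, (Rabs_right v), Rmult_assoc by lra; apply Rmult_le_compat_l; nra).
  apply Rabs_le_between in B.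
  assert (om * om <= Rabs om * Rabs om) by (rewrite <- Rabs_mult; apply Rle_abs).
  nra.
Qed.

(* If the segment [G 0 + v w] lies in the strip [G s + om X s], then [w] lies in its
   tangent plane at [G 0]. *)
Lemma segment_in_strip_tangent l (G X : R -> vec) (et w q : vec) (d0 : R) :
  is_vderive G 0 et -> dot et et = 1 -> vcont X 0 ->
  (forall s, Iv l s -> dot (X s) (X s) = 1) -> dot w w = 1 ->
  (forall eps, 0 < eps -> exists m, 0 < m /\ forall s, Iv l s -> eps <= Rabs s ->
      m <= dot (vsub (G s) (G 0)) (vsub (G s) (G 0))) ->
  dot q et = 0 -> dot q (X 0) = 0 -> 0 < d0 ->
  (forall v, 0 < Rabs v -> Rabs v < d0 -> exists s om, Iv l s /\ Rabs om < 2 * Rabs v /\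
      vadd (G 0) (vscale v w) = vadd (G s) (vscale om (X s))) ->
  dot q w = 0.
Proof.
  intros HG Het HX HXu Hw Hsep Hqe Hqx Hd0 Hseg.
  apply (eq0_of_Rabs_le_small _ (6 * l1norm q)); [pose proof (l1norm_ge0 q); lra|].
  intros eta Heta.
  destruct (is_vderive_remainder G 0 et HG eta ltac:(lra)) as [d1 [P1 K1]].
  destruct HX as (X1 & X2 & X3).
  destruct (continuity_pt_eps _ _ X1 eta ltac:(lra)) as [dx [Px Kx]].
  destruct (continuity_pt_eps _ _ X2 eta ltac:(lra)) as [dy [Py Ky]].
  destruct (continuity_pt_eps _ _ X3 eta ltac:(lra)) as [dz [Pz Kz]].
  set (e' := Rmin d1 (Rmin dx (Rmin dy dz))).
  assert (He' : 0 < e') by (repeat apply Rmin_glb_lt; auto).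
  assert (E1 : e' <= d1 /\ e' <= dx /\ e' <= dy /\ e' <= dz).
  { unfold e'; pose proof (Rmin_l d1 (Rmin dx (Rmin dy dz))); pose proof (Rmin_r d1 (Rmin dx (Rmin dy dz)));
      pose proof (Rmin_l dx (Rmin dy dz)); pose proof (Rmin_r dx (Rmin dy dz));
      pose proof (Rmin_l dy dz); pose proof (Rmin_r dy dz); lra. }
  destruct (Hsep e' He') as [m [Hm Km]].
  set (v := Rmin (d0 / 2) (Rmin 1 (m / 18))).
  assert (Hv : 0 < v /\ v <= d0 / 2 /\ v <= 1 /\ v <= m / 18).
  { assert (0 < v) by (repeat apply Rmin_glb_lt; lra).
    unfold v in *; pose proof (Rmin_l (d0 / 2) (Rmin 1 (m / 18)));
      pose proof (Rmin_r (d0 / 2) (Rmin 1 (m / 18))); pose proof (Rmin_l 1 (m / 18));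
      pose proof (Rmin_r 1 (m / 18)); lra. }
  assert (Hav : Rabs v = v) by (apply Rabs_right; lra).
  destruct (Hseg v) as [s [om [Hs [Hom Heq]]]]; [lra|lra|]; rewrite Hav in Hom.
  assert (HD : vsub (G s) (G 0) = vsub (vscale v w) (vscale om (X s))).
  { apply (f_equal (fun p => vsub p (vadd (G 0) (vscale om (X s))))) in Heq; cbv beta in Heq.
    transitivity (vsub (vadd (G s) (vscale om (X s))) (vadd (G 0) (vscale om (X s)))); [vring|].
    rewrite <- Heq; vring. }
  assert (Hsl : Rabs s < e').
  { apply Rnot_le_lt; intros Hge; specialize (Km s Hs Hge); rewrite HD in Km.
    pose proof (dist_sq_segment_le w (X s) v om Hw (HXu s Hs) ltac:(lra) Hom); nra. }
  destruct (K1 s ltac:(rewrite Rminus_0_r; lra)) as (R1 & R2 & R3); rewrite Rminus_0_r in R1, R2, R3.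
  apply (tangent_plane_estimate et w q (X s) (X 0) (vremainder G 0 et s) s v om eta); auto; try lra.
  - unfold vremainder; rewrite HD; vring.
  - replace (vx (vsub (X s) (X 0))) with (vx (X s) - vx (X 0)) by vring.
    left; apply Kx; rewrite Rminus_0_r; lra.
  - replace (vy (vsub (X s) (X 0))) with (vy (X s) - vy (X 0)) by vring.
    left; apply Ky; rewrite Rminus_0_r; lra.
  - replace (vz (vsub (X s) (X 0))) with (vz (X s) - vz (X 0)) by vring.
    left; apply Kz; rewrite Rminus_0_r; lra.
Qed.

(** * Strips along the curve and along its reflection *)

Definition developable_frame (l : R) (g xi : R -> vec) (alpha beta : R -> R) : Prop :=
  forall t, Iv l t ->
    is_vderive g t (vderive g t) /\ is_vderive xi t (vderive xi t) /\
    det3 (vderive g t) (xi t) (vderive xi t) = 0 /\ dot (xi t) (xi t) = 1 /\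
    0 < Rabs (alpha t) < PI / 2 /\ 0 < beta t < PI /\
    xi t = frame_vec (tangent g t) (pnormal g t) (cos (beta t)) (sin (beta t))
                     (cos (alpha t)) (sin (alpha t)).

Lemma normal_form_decompose l g F alpha : in_Dstar_normal l g F alpha ->
  exists xi beta eps, 0 < eps /\
    (forall s v, Iv l s -> Rabs v < eps -> F s v = vadd (g s) (vscale v (xi s))) /\
    developable_frame l g xi alpha beta.
Proof.
  intros [[U [xi (HUo & HU0 & Hsm & Himm & _ & Hrep & Hxi & Hgc)]] [[beta Hang] _]].
  destruct (open2_uniform_strip l U HUo HU0) as [eps [He KU]].
  exists xi, beta, eps; split; [exact He|]; split.
  - intros s v Hs Hv; apply Hrep, KU; auto.
  - intros t Ht.
    destruct (developable_strip_facts g xi F U t HUo Hsm Himm Hrep Hgc (HU0 t Ht)) as (Hg & Hx & Hpv & Hdev).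
    destruct (Hang t Ht) as (Ha & Hb & Hf); rewrite Hpv in Hf.
    refine (conj Hg (conj Hx (conj Hdev (conj _ (conj Ha (conj Hb Hf)))))).
    apply vnorm_eq1, (Hxi t 0), HU0, Ht.
Qed.

Lemma unit_curve_frame l c U t : vsmooth1_on U c -> (forall s, Iv l s -> U s) ->
  (forall s, Iv l s -> dot (vderive c s) (vderive c s) = 1) -> (forall s, Iv l s -> 0 < curv c s) ->
  Rabs t < l / 2 ->
  dot (tangent c t) (tangent c t) = 1 /\ dot (pnormal c t) (pnormal c t) = 1 /\
  dot (tangent c t) (pnormal c t) = 0.
Proof.
  intros Hsm HU Hunit Hk Ht; assert (It : Iv l t) by (apply Iv_of_Rabs_lt, Ht).
  split; [apply Hunit, It|]; split; [apply dot_pnormal_self, Hk, It|].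
  apply dot_tangent_pnormal; [exact (vsmooth1_is_vderive2 U c t Hsm (HU t It))|].
  apply (filter_imp _ _ (fun s Hs => Hunit s (Iv_of_Rabs_lt _ _ Hs)) (locally_Rabs_lt t _ Ht)).
Qed.

Section ReflectedCurve.
Variables (l : R) (c : R -> vec) (U : R -> Prop) (f1 f2 f3 b : vec).
Local Notation A := (linmap f1 f2 f3).
Local Notation cr := (fun s => c (- s)).
Hypotheses (Hsm : vsmooth1_on U c) (HU : forall s, Iv l s -> U s) (Hon : orthonormal f1 f2 f3)
  (Hrel : forall s, Iv l s -> vadd b (A (c s)) = c (- s)).

Lemma reflect_locally t : Rabs t < l / 2 -> locally t (fun u => vadd b (A (c u)) = c (- u)).
Proof.
  intros Ht; exact (filter_imp _ _ (fun u Hu => Hrel u (Iv_of_Rabs_lt _ _ Hu)) (locally_Rabs_lt t _ Ht)).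
Qed.

Lemma reflect_vderive t : Rabs t < l / 2 -> vderive cr t = A (vderive c t).
Proof.
  intros Ht; transitivity (vderive (fun u => vadd b (A (c u))) t).
  - symmetry; apply vderive_ext_loc, reflect_locally, Ht.
  - apply is_vderive_unique, is_vderive_affine, (vsmooth1_is_vderive U), HU, Iv_of_Rabs_lt; auto.
Qed.

Lemma reflect_is_vderive2 t : Rabs t < l / 2 -> is_vderive (vderive cr) t (A (vderive (vderive c) t)).
Proof.
  intros Ht; apply (is_vderive_ext_loc (fun u => vadd vzero (A (vderive c u)))).
  - apply (filter_imp _ _ (fun u Hu => eq_trans (vadd_0_l _) (eq_sym (reflect_vderive u Hu)))
             (locally_Rabs_lt t _ Ht)).
  - apply is_vderive_affine, (vsmooth1_is_vderive2 U), HU, Iv_of_Rabs_lt; auto.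
Qed.

Lemma reflect_vderive2 t : Rabs t < l / 2 -> vderive (vderive cr) t = A (vderive (vderive c) t).
Proof. intros Ht; apply is_vderive_unique, reflect_is_vderive2, Ht. Qed.

Lemma reflect_curv t : Rabs t < l / 2 -> curv cr t = curv c t.
Proof. intros Ht; unfold curv, vnorm; rewrite reflect_vderive2, dot_linmap by auto; reflexivity. Qed.

Lemma reflect_pnormal t : Rabs t < l / 2 -> pnormal cr t = A (pnormal c t).
Proof.
  intros Ht; unfold pnormal; rewrite reflect_vderive2, reflect_curv, linmap_scale by auto; reflexivity.
Qed.

Lemma reflect_curv_opp t : Rabs t < l / 2 -> curv c (- t) = curv c t.
Proof.
  intros Ht; rewrite <- (reflect_curv t Ht); unfold curv.
  rewrite (vderive2_opp U c t Hsm); [reflexivity|].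
  apply HU, Iv_of_Rabs_lt; rewrite Rabs_Ropp; exact Ht.
Qed.
End ReflectedCurve.

(* The coefficients of [Y] in the basis [(e, X)] of their common plane,
   written through dot products only, hence differentiable along the strips. *)
Definition gram_coef1 (e X Y : vec) : R :=
  (dot Y e - dot e X * dot Y X) / (1 - dot e X * dot e X).
Definition gram_coef2 (e X Y : vec) : R :=
  (dot Y X - dot e X * dot Y e) / (1 - dot e X * dot e X).

Lemma gram_coefs_frame_vec e n cb sb cbs sbs ca sa :
  dot e e = 1 -> dot n n = 1 -> dot e n = 0 -> ca * ca + sa * sa = 1 ->
  sb * sb + cb * cb = 1 -> 0 < sb ->
  let X := frame_vec e n cb sb ca sa in let Y := frame_vec e n cbs sbs ca sa in
  gram_coef1 e X Y = cbs - cb * sbs / sb /\ gram_coef2 e X Y = sbs / sb /\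
  1 - dot e X * dot e X <> 0.
Proof.
  intros He Hn Hen Ha Hb Hsb X Y.
  destruct (frame_vec_coords e n He Hn Hen cb sb ca sa) as [GX _].
  destruct (frame_vec_coords e n He Hn Hen cbs sbs ca sa) as [GY _].
  pose proof (dot_frame_vec e n He Hn Hen cbs sbs cb sb ca sa) as P; rewrite Ha in P.
  fold X Y in GX, GY, P; unfold gram_coef1, gram_coef2; rewrite (dot_comm Y e), GX, GY, P.
  assert (D : 1 - cb * cb = sb * sb) by lra.
  rewrite D; split; [|split]; [|field; lra|nra].
  replace cbs with (cbs * (sb * sb + cb * cb)) at 1 by (rewrite Hb; ring); field; lra.
Qed.

Lemma gram_decomp_frame_vec e n cb sb cbs sbs ca sa : sb <> 0 ->
  vadd (vscale (cbs - cb * sbs / sb) e) (vscale (sbs / sb) (frame_vec e n cb sb ca sa)) =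
  frame_vec e n cbs sbs ca sa.
Proof. intros; unfold frame_vec; apply vec_ext; vexpand; field; assumption. Qed.

Lemma det3_decomp E X W a b : det3 E (vadd (vscale a E) (vscale b X)) W = b * det3 E X W.
Proof. vring. Qed.

Lemma sin_cos_eq_of_cross cb sb cbs sbs : 0 < sb -> 0 < sbs ->
  sb * sb + cb * cb = 1 -> sbs * sbs + cbs * cbs = 1 -> cbs * sb = cb * sbs -> cb = cbs /\ sb = sbs.
Proof.
  intros Hsb Hsbs H1 H2 E.
  assert (E2 : cb * cb = cbs * cbs).
  { assert (cbs * cbs * (sb * sb) = cb * cb * (sbs * sbs))
      by (transitivity ((cbs * sb) * (cbs * sb)); [ring|rewrite E; ring]).
    nra. }
  assert (Hc : cb = cbs).
  { assert ((cb - cbs) * (cb + cbs) = 0) as F by lra; apply Rmult_integral in F; destruct F; [lra|].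
    assert (cbs = - cb) by lra; subst cbs; nra. }
  subst cbs; split; [reflexivity|nra].
Qed.

Lemma sin_neq0_of_Rabs_lt a : 0 < Rabs a < PI / 2 -> sin a <> 0.
Proof.
  intros [H1 H2]; pose proof PI_RGT_0; apply Rabs_def2 in H2.
  destruct (Rtotal_order a 0) as [N|[Z|P]].
  - apply Rlt_not_eq, sin_lt_0_var; lra.
  - rewrite Z, Rabs_R0 in H1; lra.
  - apply Rgt_not_eq, sin_gt_0; lra.
Qed.

Lemma alpha_eq_of_cos a1 a2 : 0 < Rabs a1 < PI / 2 -> 0 < Rabs a2 < PI / 2 ->
  (0 < a1 <-> 0 < a2) -> cos a1 = cos a2 -> a1 = a2.
Proof.
  intros H1 H2 Hs Hc.
  assert (C : forall a, cos (Rabs a) = cos a)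
    by (intros a; destruct (Rcase_abs a);
        [rewrite Rabs_left by lra; apply cos_neg|rewrite Rabs_right by lra; reflexivity]).
  assert (E : Rabs a1 = Rabs a2) by (pose proof PI_RGT_0; apply cos_inj; try lra; rewrite !C; auto).
  assert (a1 <> 0) by (intros Z; rewrite Z, Rabs_R0 in H1; lra).
  assert (a2 <> 0) by (intros Z; rewrite Z, Rabs_R0 in H2; lra).
  destruct (Rcase_abs a1), (Rcase_abs a2).
  - rewrite !Rabs_left in E by lra; lra.
  - assert (P : 0 < a2) by lra; apply Hs in P; lra.
  - assert (P : 0 < a1) by lra; apply Hs in P; lra.
  - rewrite !Rabs_right in E by lra; lra.
Qed.

Lemma det3_gram_derivative E X E' X' a b a' b' :
  det3 E (vadd (vscale a E) (vscale b X))
       (vadd (vadd (vscale a' E) (vscale a E')) (vadd (vscale b' X) (vscale b X'))) =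
  b * (a * det3 E X E' + b * det3 E X X').
Proof. rewrite det3_decomp; f_equal; vring. Qed.

Lemma is_derive_gram_coefs E X Y s DE DX DY :
  is_vderive E s DE -> is_vderive X s DX -> is_vderive Y s DY ->
  1 - dot (E s) (X s) * dot (E s) (X s) <> 0 ->
  (exists a', is_derive (fun t => gram_coef1 (E t) (X t) (Y t)) s a') /\
  (exists b', is_derive (fun t => gram_coef2 (E t) (X t) (Y t)) s b').
Proof.
  intros HE HX HY Hnz.
  pose proof (is_derive_dot _ _ _ _ _ HE HX) as G.
  pose proof (is_derive_dot _ _ _ _ _ HY HX) as P.
  pose proof (is_derive_dot _ _ _ _ _ HY HE) as H.
  pose proof (is_derive_minus _ _ s _ _ (is_derive_const 1 s) (is_derive_mult _ _ s _ _ G G Rmult_comm)) as D.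
  split; eexists.
  - exact (is_derive_div _ _ s _ _ (is_derive_minus _ _ s _ _ H (is_derive_mult _ _ s _ _ G P Rmult_comm)) D Hnz).
  - exact (is_derive_div _ _ s _ _ (is_derive_minus _ _ s _ _ P (is_derive_mult _ _ s _ _ G H Rmult_comm)) D Hnz).
Qed.

Section ReflectedStrip.
Variables (l : R) (c : R -> vec) (U : R -> Prop) (f1 f2 f3 b : vec)
  (xi xis : R -> vec) (alpha beta alphas betas : R -> R).
Local Notation A := (linmap f1 f2 f3).
Local Notation cr := (fun s => c (- s)).
Hypotheses (Hl : 0 < l) (Hsm : vsmooth1_on U c) (HU : forall s, Iv l s -> U s)
  (Hunit : forall s, Iv l s -> dot (vderive c s) (vderive c s) = 1)
  (Hk : forall s, Iv l s -> 0 < curv c s)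
  (Hon : orthonormal f1 f2 f3) (Hdet : det3 f1 f2 f3 = 1)
  (Hrel : forall s, Iv l s -> vadd b (A (c s)) = c (- s))
  (HF : developable_frame l c xi alpha beta) (HS : developable_frame l cr xis alphas betas)
  (Hsign : forall s, Iv l s -> (0 < alphas s <-> 0 < alpha s))
  (Hcurv : forall s, Iv l s -> curv c (- s) * cos (alphas s) = curv c s * cos (alpha s)).

Lemma reflected_alpha t : Rabs t < l / 2 -> alphas t = alpha t.
Proof.
  intros Ht; assert (It : Iv l t) by (apply Iv_of_Rabs_lt, Ht).
  destruct (HF t It) as (_ & _ & _ & _ & Ha & _); destruct (HS t It) as (_ & _ & _ & _ & Has & _).
  apply alpha_eq_of_cos; auto.
  pose proof (Hcurv t It) as E; rewrite (reflect_curv_opp l c U f1 f2 f3 b Hsm HU Hon Hrel t Ht) in E.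
  pose proof (Hk t It); apply (Rmult_eq_reg_l (curv c t)); lra.
Qed.

Lemma reflected_frames t : Rabs t < l / 2 ->
  A (xi t) = frame_vec (A (tangent c t)) (A (pnormal c t)) (cos (beta t)) (sin (beta t))
                       (cos (alpha t)) (sin (alpha t)) /\
  xis t = frame_vec (A (tangent c t)) (A (pnormal c t)) (cos (betas t)) (sin (betas t))
                    (cos (alpha t)) (sin (alpha t)).
Proof.
  intros Ht; assert (It : Iv l t) by (apply Iv_of_Rabs_lt, Ht).
  destruct (unit_curve_frame l c U t Hsm HU Hunit Hk Ht) as (He & Hn & Hen).
  destruct (HF t It) as (_ & _ & _ & _ & _ & _ & Hxi); destruct (HS t It) as (_ & _ & _ & _ & _ & _ & Hxis).
  split; [rewrite Hxi; apply linmap_frame_vec; auto|].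
  rewrite Hxis, <- (reflected_alpha t Ht); unfold tangent at 1.
  rewrite (reflect_vderive l c U f1 f2 f3 b Hsm HU Hrel t Ht),
    (reflect_pnormal l c U f1 f2 f3 b Hsm HU Hon Hrel t Ht).
  reflexivity.
Qed.

Lemma reflected_gram t : Rabs t < l / 2 ->
  let E := vderive cr t in let X := A (xi t) in
  gram_coef1 E X (xis t) = cos (betas t) - cos (beta t) * sin (betas t) / sin (beta t) /\
  gram_coef2 E X (xis t) = sin (betas t) / sin (beta t) /\ 1 - dot E X * dot E X <> 0 /\
  vadd (vscale (gram_coef1 E X (xis t)) E) (vscale (gram_coef2 E X (xis t)) X) = xis t.
Proof.
  intros Ht E X; assert (It : Iv l t) by (apply Iv_of_Rabs_lt, Ht).
  destruct (reflected_frames t Ht) as [HX HXs].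
  destruct (unit_curve_frame l c U t Hsm HU Hunit Hk Ht) as (He & Hn & Hen).
  rewrite <- (dot_linmap f1 f2 f3 Hon) in He, Hn, Hen.
  destruct (HF t It) as (_ & _ & _ & _ & _ & Hb & _).
  assert (Sb : 0 < sin (beta t)) by (apply sin_gt_0; lra).
  pose proof (sin2_cos2 (alpha t)) as SA; pose proof (sin2_cos2 (beta t)) as SB; unfold Rsqr in SA, SB.
  unfold E, X; rewrite (reflect_vderive l c U f1 f2 f3 b Hsm HU Hrel t Ht), HX, HXs.
  destruct (gram_coefs_frame_vec _ _ (cos (beta t)) (sin (beta t)) (cos (betas t)) (sin (betas t))
              (cos (alpha t)) (sin (alpha t)) He Hn Hen ltac:(lra) SB Sb) as (C1 & C2 & C3).
  change (vderive c t) with (tangent c t); rewrite C1, C2.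
  split; [reflexivity|split; [reflexivity|split; [exact C3|]]].
  apply gram_decomp_frame_vec; lra.
Qed.

Lemma reflected_det_curvature s : Rabs s < l / 2 ->
  det3 (vderive cr s) (A (xi s)) (A (vderive (vderive c) s)) = - curv c s * (sin (beta s) * sin (alpha s)).
Proof.
  intros Hs; assert (Is : Iv l s) by (apply Iv_of_Rabs_lt, Hs).
  destruct (unit_curve_frame l c U s Hsm HU Hunit Hk Hs) as (He & Hn & Hen).
  destruct (frame_vec_coords _ _ He Hn Hen (cos (beta s)) (sin (beta s)) (cos (alpha s)) (sin (alpha s)))
    as (_ & _ & K).
  destruct (HF s Is) as (_ & _ & _ & _ & _ & _ & Hxi).
  rewrite (reflect_vderive l c U f1 f2 f3 b Hsm HU Hrel s Hs), det3_linmap, Hdet,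
    vderive2_curv_pnormal, Hxi, <- K by auto.
  unfold tangent; vring.
Qed.

(* [xis] lies in the plane of [cr'] and [A xi]; developability of both strips
   kills its [cr'] component. *)
Lemma reflected_gram_coef1_zero s : Rabs s < l / 2 -> gram_coef1 (vderive cr s) (A (xi s)) (xis s) = 0.
Proof.
  intros Hs; assert (Is : Iv l s) by (apply Iv_of_Rabs_lt, Hs).
  set (E := vderive cr); set (X := fun t => A (xi t)).
  set (af := fun t => gram_coef1 (E t) (X t) (xis t)); set (bf := fun t => gram_coef2 (E t) (X t) (xis t)).
  destruct (reflected_gram s Hs) as (_ & Hb & Hnz & Hdec); fold (E s) (X s) (af s) (bf s) in Hb, Hnz, Hdec.
  pose proof (reflect_is_vderive2 l c U f1 f2 f3 b Hsm HU Hrel s Hs) as DE; fold E in DE.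
  destruct (HF s Is) as (_ & Dxi & HdevF & _ & Hal & Hbe & _).
  destruct (HS s Is) as (_ & DXs & HdevS & _ & _ & Hbs & _).
  assert (DX : is_vderive X s (A (vderive xi s))).
  { apply (is_vderive_ext_loc (fun t => vadd vzero (A (xi t)))); [|exact (is_vderive_affine _ _ _ _ _ _ _ Dxi)].
    apply filter_forall; intros t; apply vadd_0_l. }
  destruct (is_derive_gram_coefs E X xis s _ _ _ DE DX DXs Hnz) as [[a' Da] [b' Db]].
  assert (Dxis : vderive xis s = vadd (vadd (vscale a' (E s)) (vscale (af s) (A (vderive (vderive c) s))))
                                      (vadd (vscale b' (X s)) (vscale (bf s) (A (vderive xi s))))).
  { apply is_vderive_unique, (is_vderive_ext_loc (fun t => vadd (vscale (af t) (E t)) (vscale (bf t) (X t)))).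
    - exact (filter_imp _ _ (fun t Ht => proj2 (proj2 (proj2 (reflected_gram t Ht)))) (locally_Rabs_lt s _ Hs)).
    - exact (is_vderive_add _ _ _ _ _ (is_vderive_scal_fun _ _ _ _ _ Da DE)
               (is_vderive_scal_fun _ _ _ _ _ Db DX)). }
  assert (Z : det3 (E s) (X s) (A (vderive xi s)) = 0).
  { unfold X, E; rewrite (reflect_vderive l c U f1 f2 f3 b Hsm HU Hrel s Hs), det3_linmap, Hdet.
    rewrite HdevF; ring. }
  fold E in HdevS; rewrite Dxis, <- Hdec, det3_gram_derivative, Z in HdevS.
  unfold E, X in HdevS; rewrite reflected_det_curvature, Hb in HdevS by exact Hs.
  assert (0 < sin (beta s)) by (apply sin_gt_0; lra); assert (0 < sin (betas s)) by (apply sin_gt_0; lra).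
  pose proof (Hk s Is); pose proof (sin_neq0_of_Rabs_lt _ Hal).
  assert (0 < sin (betas s) / sin (beta s)) by (apply Rdiv_lt_0_compat; lra).
  apply Rmult_integral in HdevS; destruct HdevS as [Z1|Z1]; [lra|].
  rewrite Rmult_0_r, Rplus_0_r in Z1; apply Rmult_integral in Z1; destruct Z1 as [Z1|Z1]; [exact Z1|].
  exfalso; apply Rmult_integral in Z1; destruct Z1 as [Z1|Z1]; [lra|].
  apply Rmult_integral in Z1; destruct Z1; [lra|contradiction].
Qed.

Lemma reflected_strip_interior s : Rabs s < l / 2 -> A (xi s) = xis s.
Proof.
  intros Hs; assert (Is : Iv l s) by (apply Iv_of_Rabs_lt, Hs).
  pose proof (reflected_gram_coef1_zero s Hs) as Z; destruct (reflected_gram s Hs) as (Ha & _); cbv zeta in Ha.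
  rewrite Z in Ha.
  destruct (HF s Is) as (_ & _ & _ & _ & _ & Hbe & _); destruct (HS s Is) as (_ & _ & _ & _ & _ & Hbs & _).
  assert (Sb : 0 < sin (beta s)) by (apply sin_gt_0; lra).
  assert (Sbs : 0 < sin (betas s)) by (apply sin_gt_0; lra).
  assert (Hcross : cos (betas s) * sin (beta s) = cos (beta s) * sin (betas s)).
  { replace (cos (betas s)) with (cos (beta s) * sin (betas s) / sin (beta s)) by lra; field; lra. }
  pose proof (sin2_cos2 (beta s)) as SB; pose proof (sin2_cos2 (betas s)) as SBs; unfold Rsqr in SB, SBs.
  destruct (sin_cos_eq_of_cross _ _ _ _ Sb Sbs SB SBs Hcross) as [Ec Es].
  destruct (reflected_frames s Hs) as [HX HXs]; rewrite HX, HXs, Ec, Es; reflexivity.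
Qed.

Lemma reflected_strip s : Iv l s -> A (xi s) = xis s.
Proof.
  intros Is.
  destruct (HF s Is) as (_ & Dxi & _); destruct (HS s Is) as (_ & Dxis & _).
  destruct (vcont_linmap f1 f2 f3 _ _ (is_vderive_vcont _ _ _ Dxi)) as (C1 & C2 & C3).
  destruct (is_vderive_vcont _ _ _ Dxis) as (K1 & K2 & K3).
  apply vec_ext; [apply (Iv_eq_of_interior_eq l (fun t => vx (A (xi t))) (fun t => vx (xis t)))
                 |apply (Iv_eq_of_interior_eq l (fun t => vy (A (xi t))) (fun t => vy (xis t)))
                 |apply (Iv_eq_of_interior_eq l (fun t => vz (A (xi t))) (fun t => vz (xis t)))];
    auto using Iv_continuous_of_continuity_pt;
    intros t Ht; rewrite (reflected_strip_interior t Ht); reflexivity.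
Qed.
End ReflectedStrip.

(** * Congruence of the strips *)

Lemma sin_add_same_sign_neq0 a a' : 0 < Rabs a < PI / 2 -> 0 < Rabs a' < PI / 2 ->
  (0 < a' <-> 0 < a) -> sin a' * cos a + cos a' * sin a <> 0.
Proof.
  intros Ha Ha' Hs.
  assert (Hsign : forall x, 0 < Rabs x < PI / 2 -> (0 < x -> 0 < sin x) /\ (x < 0 -> sin x < 0) /\ 0 < cos x).
  { intros x [H1 H2]; pose proof PI_RGT_0; apply Rabs_def2 in H2; destruct H2; split; [|split].
    - intros; apply sin_gt_0; lra.
    - intros; apply sin_lt_0_var; lra.
    - apply cos_gt_0; lra. }
  destruct (Hsign a Ha) as (S1 & S2 & C); destruct (Hsign a' Ha') as (S1' & S2' & C').
  assert (Ha0 : a <> 0) by (intros Z; rewrite Z, Rabs_R0 in Ha; lra).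
  assert (Ha0' : a' <> 0) by (intros Z; rewrite Z, Rabs_R0 in Ha'; lra).
  destruct (Rtotal_order a 0) as [N|[Z|P]]; [|contradiction|].
  - assert (N' : a' < 0)
      by (destruct (Rtotal_order a' 0) as [|[|P']]; [assumption|contradiction|apply Hs in P'; lra]).
    specialize (S2 N); specialize (S2' N'); nra.
  - assert (P' : 0 < a') by (apply Hs, P); specialize (S1 P); specialize (S1' P'); nra.
Qed.

Lemma ruling_angles_sign k b b' a a' : 0 < b < PI -> 0 < b' < PI ->
  0 < Rabs a < PI / 2 -> 0 < Rabs a' < PI / 2 -> (0 < a' <-> 0 < a) -> (k = 1 \/ k = -1) ->
  sin b' * sin b * (sin a' * cos a + k * cos a' * sin a) = 0 -> k = -1.
Proof.
  intros Hb Hb' Ha Ha' Hs [E|E] H; [exfalso|exact E].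
  assert (0 < sin b) by (apply sin_gt_0; lra); assert (0 < sin b') by (apply sin_gt_0; lra).
  apply (sin_add_same_sign_neq0 a a' Ha Ha' Hs).
  subst k; apply Rmult_integral in H; destruct H as [H|H]; [nra|lra].
Qed.

(* In the frame [(e, n)] at [c 0]: the normal [q] of the tangent plane of the
   second strip, evaluated on the image [w] of the first ruling. *)
Lemma tangent_normal_dot_image f1 f2 f3 e n lam cb sb ca sa cbs sbs cas sas :
  orthonormal f1 f2 f3 -> dot e e = 1 -> dot n n = 1 -> dot e n = 0 ->
  linmap f1 f2 f3 e = vscale lam e -> linmap f1 f2 f3 n = n -> lam * lam = 1 ->
  let w := linmap f1 f2 f3 (frame_vec e n cb sb ca sa) in
  let x := frame_vec (vscale (-1) e) n cbs sbs cas sas in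
  let bt := cross (vscale (-1) e) n in
  dot (vsub (vscale (dot bt x) n) (vscale (dot n x) bt)) w =
  sbs * sb * (sas * ca + lam * det3 f1 f2 f3 * cas * sa).
Proof.
  intros Hon He Hn Hen HAe HAn Hlam w x bt.
  assert (Het : dot (vscale (-1) e) (vscale (-1) e) = 1) by (rewrite <- He; vring).
  assert (Hetn : dot (vscale (-1) e) n = 0) by (transitivity (- dot e n); [vring|rewrite Hen; ring]).
  destruct (frame_vec_coords _ _ Het Hn Hetn cbs sbs cas sas) as (_ & Nx & Bx); fold x in Nx, Bx.
  destruct (frame_vec_coords _ _ He Hn Hen cb sb ca sa) as (_ & Nxi & Dxi).
  assert (Nw : dot n w = sb * ca) by (unfold w; rewrite <- HAn at 1; rewrite dot_linmap; auto).
  assert (Bw : dot bt w = - lam * det3 f1 f2 f3 * (sb * sa)).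
  { assert (E : vscale (-1) e = vscale (- lam) (linmap f1 f2 f3 e))
      by (rewrite HAe; transitivity (vscale (- (lam * lam)) e); [rewrite Hlam|]; vring).
    unfold bt; change (dot (cross (vscale (-1) e) n) w) with (det3 (vscale (-1) e) n w).
    rewrite E, <- HAn at 1; unfold w.
    transitivity (- lam * det3 (linmap f1 f2 f3 e) (linmap f1 f2 f3 n)
                               (linmap f1 f2 f3 (frame_vec e n cb sb ca sa)));
      [vring|rewrite det3_linmap, Dxi; ring]. }
  change (det3 (vscale (-1) e) n x) with (dot bt x) in Bx.
  transitivity (dot bt x * dot n w - dot n x * dot bt w); [vring|].
  rewrite Nw, Bw, Nx, Bx; ring.
Qed.

Lemma reflection_frame_at_0 l c U f1 f2 f3 b : 0 < l -> vsmooth1_on U c -> (forall s, Iv l s -> U s) ->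
  orthonormal f1 f2 f3 -> (forall s, Iv l s -> vadd b (linmap f1 f2 f3 (c s)) = c (- s)) ->
  linmap f1 f2 f3 (vderive c 0) = vscale (-1) (vderive c 0) /\
  linmap f1 f2 f3 (pnormal c 0) = pnormal c 0.
Proof.
  intros Hl Hsm HU Hon Hrel.
  assert (H0 : Rabs 0 < l / 2) by (rewrite Rabs_R0; lra).
  assert (HU0 : U (- 0)) by (rewrite Ropp_0; apply HU; unfold Iv; lra).
  assert (D2 : vderive (vderive (fun s => c (- s))) 0 = vderive (vderive c) 0)
    by (rewrite (vderive2_opp U c 0 Hsm HU0), Ropp_0; reflexivity).
  split.
  - rewrite <- (reflect_vderive l c U f1 f2 f3 b Hsm HU Hrel 0 H0), (vderive_opp U c 0 Hsm HU0), Ropp_0.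
    reflexivity.
  - rewrite <- (reflect_pnormal l c U f1 f2 f3 b Hsm HU Hon Hrel 0 H0).
    unfold pnormal, curv; rewrite D2; reflexivity.
Qed.

Lemma congruence_maps_curve l c T F Fs xis eps0 eS : 0 < l ->
  (forall t, Iv l t -> is_vderive c t (vderive c t)) -> 0 < eps0 -> 0 < eS ->
  (forall eps, 0 < eps < eps0 -> forall p,
     (exists s v, Omega l eps s v /\ p = T (F s v)) <-> (exists s v, Omega l eps s v /\ p = Fs s v)) ->
  (forall s v, Iv l s -> Rabs v < eS -> Fs s v = vadd (c (- s)) (vscale v (xis s))) ->
  (forall s, Iv l s -> dot (xis s) (xis s) = 1) -> (forall s, Iv l s -> F s 0 = c s) ->
  forall s, Iv l s -> exists t, Iv l t /\ T (c s) = c t.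
Proof.
  intros Hl Hdc He0 HeS Hset HSrep Hxis HF0 s Hs.
  apply (on_curve_of_approx l c Hdc _ Hl); intros eps He.
  set (e := Rmin (Rmin eps0 eS) (Rmin 1 eps) / 2).
  assert (Hmin : 0 < Rmin (Rmin eps0 eS) (Rmin 1 eps)) by (repeat apply Rmin_glb_lt; lra).
  pose proof (Rmin_l (Rmin eps0 eS) (Rmin 1 eps)); pose proof (Rmin_r (Rmin eps0 eS) (Rmin 1 eps));
    pose proof (Rmin_l eps0 eS); pose proof (Rmin_r eps0 eS); pose proof (Rmin_l 1 eps); pose proof (Rmin_r 1 eps).
  destruct (proj1 (Hset e ltac:(unfold e; lra) (T (c s)))) as [sg [om [[Hsg Hom] Heq]]].
  { exists s, 0; split; [split; [exact Hs|unfold e; lra]|rewrite HF0; auto]. }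
  assert (Hom' : Rabs om < e) by (apply Rabs_def1; lra).
  rewrite HSrep in Heq by (auto; unfold e in *; lra).
  exists (- sg); split; [unfold Iv in *; lra|].
  rewrite Heq.
  replace (dot (vsub (c (- sg)) (vadd (c (- sg)) (vscale om (xis sg))))
               (vsub (c (- sg)) (vadd (c (- sg)) (vscale om (xis sg)))))
    with (om * om * dot (xis sg) (xis sg)) by vring.
  rewrite Hxis by exact Hsg.
  assert (om * om <= Rabs om * Rabs om) by (rewrite <- Rabs_mult; apply Rle_abs).
  pose proof (Rabs_pos om); unfold e in *; nra.
Qed.

Section Congruence.
Variables (l : R) (c : R -> vec) (U : R -> Prop) (F Fs : R -> R -> vec) (xi xis : R -> vec)
  (alpha beta alphas betas : R -> R) (eF eS : R).
Local Notation cr := (fun s => c (- s)).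
Hypotheses (Hl : 0 < l) (Hsm : vsmooth1_on U c) (HU : forall s, Iv l s -> U s)
  (Hunit : forall s, Iv l s -> dot (vderive c s) (vderive c s) = 1)
  (Hinj : forall s t, Iv l s -> Iv l t -> c s = c t -> s = t)
  (Hk : forall s, Iv l s -> 0 < curv c s)
  (Hnp : ~ (exists (m : vec) (d : R), m <> vzero /\ forall s, Iv l s -> dot m (c s) = d))
  (HeF : 0 < eF) (HFrep : forall s v, Iv l s -> Rabs v < eF -> F s v = vadd (c s) (vscale v (xi s)))
  (HFd : developable_frame l c xi alpha beta)
  (HeS : 0 < eS) (HSrep : forall s v, Iv l s -> Rabs v < eS -> Fs s v = vadd (c (- s)) (vscale v (xis s)))
  (HSd : developable_frame l cr xis alphas betas)
  (Hsign : forall s, Iv l s -> (0 < alphas s <-> 0 < alpha s))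
  (Hcurv : forall s, Iv l s -> curv c (- s) * cos (alphas s) = curv c s * cos (alpha s)).

Let Hdc : forall t, Iv l t -> is_vderive c t (vderive c t).
Proof. intros t Ht; exact (vsmooth1_is_vderive U c t Hsm (HU t Ht)). Qed.

(* If [T] fixes [C] pointwise it is the identity, [C] being non-planar. *)
Lemma isometry_preserving_curve T f1 f2 f3 b :
  orthonormal f1 f2 f3 -> (forall p, T p = vadd b (linmap f1 f2 f3 p)) ->
  (forall s, Iv l s -> exists t, Iv l t /\ T (c s) = c t) ->
  (forall p, T p = p) \/ (forall s, Iv l s -> T (c s) = c (- s)).
Proof.
  intros Hon HT HC.
  destruct (curve_self_map_param l c U f1 f2 f3 b Hl Hsm HU Hunit Hinj Hon) as [lam0 [[E|E] Hrel]];
    [intros s Hs; destruct (HC s Hs) as [t [Ht Et]]; exists t; rewrite <- HT; auto| |]; subst lam0.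
  - left; intros p; rewrite HT; apply (affine_fixing_nonplanar_id l c); auto.
    intros s Hs; rewrite Hrel by exact Hs; f_equal; ring.
  - right; intros s Hs; rewrite HT, Hrel by exact Hs; f_equal; ring.
Qed.

Lemma positive_symmetry_congruent_small : (exists T, positive_symmetry l c T) -> congruent_small l F Fs.
Proof.
  intros [T (HTiso & Hor & [p0 Hp0] & HC & _)].
  destruct (isometry_affine T HTiso) as [Hon HT].
  set (b := T vzero) in *; set (f1 := vsub (T e1) b) in *; set (f2 := vsub (T e2) b) in *;
    set (f3 := vsub (T e3) b) in *.
  assert (Hdet : det3 f1 f2 f3 = 1).
  { unfold orientation_preserving in Hor; fold b f1 f2 f3 in Hor.
    destruct (det3_orthonormal f1 f2 f3 Hon); lra. }
  destruct (isometry_preserving_curve T f1 f2 f3 b Hon HT HC) as [Hid|Hrefl]; [exfalso; auto|].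
  assert (Hrel : forall s, Iv l s -> vadd b (linmap f1 f2 f3 (c s)) = c (- s))
    by (intros s Hs; rewrite <- HT; auto).
  exists T, (Rmin eF eS); split; [exact HTiso|split; [apply Rmin_glb_lt; auto|]].
  intros eps [He1 He2] p.
  assert (Eq : forall s v, Omega l eps s v -> T (F s v) = Fs s v).
  { intros s v [Hs Hv]; pose proof (Rmin_l eF eS); pose proof (Rmin_r eF eS).
    assert (Hv' : Rabs v < eps) by (apply Rabs_def1; lra).
    rewrite HFrep, HSrep, HT by (auto; lra).
    rewrite <- Hrel, <- (reflected_strip l c U f1 f2 f3 b xi xis alpha beta alphas betas Hl Hsm HU Hunit Hk
                           Hon Hdet Hrel HFd HSd Hsign Hcurv s Hs) by exact Hs.
    vring. }
  split; intros [s [v [Hsv Hp]]]; exists s, v; split; auto; rewrite Hp; [|symmetry]; apply Eq; auto.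
Qed.

Lemma congruence_segment T eps0 f1 f2 f3 b : 0 < eps0 ->
  (forall eps, 0 < eps < eps0 -> forall p,
     (exists s v, Omega l eps s v /\ p = T (F s v)) <-> (exists s v, Omega l eps s v /\ p = Fs s v)) ->
  (forall p, T p = vadd b (linmap f1 f2 f3 p)) -> T (c 0) = c 0 ->
  forall v, 0 < Rabs v -> Rabs v < Rmin eps0 (Rmin eF eS) / 2 ->
  exists s om, Iv l s /\ Rabs om < 2 * Rabs v /\
    vadd (c (- 0)) (vscale v (linmap f1 f2 f3 (xi 0))) = vadd (c (- s)) (vscale om (xis s)).
Proof.
  intros He0 Hset HT Hc0 v Hv0 Hvd.
  pose proof (Rmin_l eps0 (Rmin eF eS)); pose proof (Rmin_r eps0 (Rmin eF eS));
    pose proof (Rmin_l eF eS); pose proof (Rmin_r eF eS).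
  destruct (proj1 (Hset (2 * Rabs v) ltac:(lra) (T (F 0 v)))) as [sg [om [[Hsg Hom] Heq]]].
  { exists 0, v; split; [split; [unfold Iv; lra|]|reflexivity].
    pose proof (Rle_abs v); pose proof (Rle_abs (- v)); rewrite Rabs_Ropp in *; split; lra. }
  exists sg, om; split; [exact Hsg|split; [apply Rabs_def1; lra|]].
  rewrite HSrep in Heq by (auto; apply Rabs_def1; lra).
  rewrite HFrep, HT in Heq by (unfold Iv; lra).
  rewrite <- Heq, Ropp_0; rewrite <- Hc0 at 1; rewrite HT; vring.
Qed.

(* The segment [T (F 0 v)] lies in the second strip, so the image of the first
   ruling at [c 0] lies in the tangent plane of the second one. *)
Lemma congruence_sign T eps0 f1 f2 f3 b lam : 0 < eps0 ->
  (forall eps, 0 < eps < eps0 -> forall p,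
     (exists s v, Omega l eps s v /\ p = T (F s v)) <-> (exists s v, Omega l eps s v /\ p = Fs s v)) ->
  orthonormal f1 f2 f3 -> (forall p, T p = vadd b (linmap f1 f2 f3 p)) -> T (c 0) = c 0 ->
  linmap f1 f2 f3 (vderive c 0) = vscale lam (vderive c 0) ->
  linmap f1 f2 f3 (pnormal c 0) = pnormal c 0 -> lam * lam = 1 ->
  lam * det3 f1 f2 f3 = -1.
Proof.
  intros He0 Hset Hon HT Hc0 HAe HAn Hlam.
  assert (I0 : Iv l 0) by (unfold Iv; lra); assert (H0 : Rabs 0 < l / 2) by (rewrite Rabs_R0; lra).
  assert (HU0 : U (- 0)) by (rewrite Ropp_0; auto).
  set (e := vderive c 0) in *; set (n := pnormal c 0) in *; set (et := vscale (-1) e).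
  destruct (unit_curve_frame l c U 0 Hsm HU Hunit Hk H0) as (He & Hn & Hen).
  change (tangent c 0) with e in He, Hen; change (pnormal c 0) with n in Hn, Hen.
  destruct (HFd 0 I0) as (_ & _ & _ & Hxi1 & Ha & Hb & Hxi0).
  destruct (HSd 0 I0) as (Dcr & Dxis & _ & _ & Has & Hbs & Hx0).
  assert (Het : vderive cr 0 = et) by (unfold et, e; rewrite (vderive_opp U c 0 Hsm HU0), Ropp_0; reflexivity).
  assert (Hnt : pnormal cr 0 = n)
    by (unfold n, pnormal, curv; rewrite (vderive2_opp U c 0 Hsm HU0), Ropp_0; reflexivity).
  unfold tangent in Hx0; rewrite Het, Hnt in Hx0; rewrite Het in Dcr.
  set (w := linmap f1 f2 f3 (xi 0)); set (x := xis 0) in *.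
  set (bt := cross et n); set (q := vsub (vscale (dot bt x) n) (vscale (dot n x) bt)).
  assert (Hqw : dot q w = 0).
  { apply (segment_in_strip_tangent l cr xis et w q (Rmin eps0 (Rmin eF eS) / 2)).
    - exact Dcr.
    - transitivity (dot e e); [unfold et; vring|exact He].
    - exact (is_vderive_vcont _ _ _ Dxis).
    - intros s Hs; destruct (HSd s Hs) as (_ & _ & _ & U1 & _); exact U1.
    - unfold w; rewrite dot_linmap by exact Hon; exact Hxi1.
    - intros eps Heps; destruct (curve_separated l c Hdc Hinj 0 eps I0 Heps) as [m [Hm Km]].
      exists m; split; [exact Hm|]; intros s Hs Hge; rewrite Ropp_0; apply Km; [unfold Iv in *; lra|].
      rewrite Rminus_0_r, Rabs_Ropp; exact Hge.
    - unfold q, bt; transitivity (dot (cross et n) x * dot et n - dot n x * 0); [vring|].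
      replace (dot et n) with (- dot e n) by (unfold et; vring); rewrite Hen; ring.
    - unfold q, x; vring.
    - assert (0 < Rmin eps0 (Rmin eF eS)) by (repeat apply Rmin_glb_lt; lra); lra.
    - exact (congruence_segment T eps0 f1 f2 f3 b He0 Hset HT Hc0). }
  unfold q, bt, w in Hqw; rewrite Hxi0, Hx0 in Hqw; unfold et in Hqw.
  rewrite (tangent_normal_dot_image f1 f2 f3 e n lam) in Hqw by auto.
  apply (ruling_angles_sign _ (beta 0) (betas 0) (alpha 0) (alphas 0) Hb Hbs Ha Has (Hsign 0 I0)); [|exact Hqw].
  assert (Hl1 : lam = 1 \/ lam = -1) by (apply Rsqr_eq; unfold Rsqr; lra).
  destruct Hl1 as [->| ->], (det3_orthonormal f1 f2 f3 Hon) as [->| ->]; [left|right|right|left]; ring.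
Qed.

Lemma congruent_small_positive_symmetry : congruent_small l F Fs -> exists T, positive_symmetry l c T.
Proof.
  intros [T [eps0 (HTiso & He0 & Hset)]].
  destruct (isometry_affine T HTiso) as [Hon HT].
  set (b := T vzero) in *; set (f1 := vsub (T e1) b) in *; set (f2 := vsub (T e2) b) in *;
    set (f3 := vsub (T e3) b) in *.
  assert (I0 : Iv l 0) by (unfold Iv; lra).
  assert (HC : forall s, Iv l s -> exists t, Iv l t /\ T (c s) = c t).
  { apply (congruence_maps_curve l c T F Fs xis eps0 eS Hl Hdc He0 HeS Hset HSrep).
    - intros s Hs; destruct (HSd s Hs) as (_ & _ & _ & U1 & _); exact U1.
    - intros s Hs; rewrite HFrep by (auto; rewrite Rabs_R0; lra); vring. }
  destruct (isometry_preserving_curve T f1 f2 f3 b Hon HT HC) as [Hid|Hrefl].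
  - exfalso.
    assert (HA : forall p, linmap f1 f2 f3 p = p).
    { intros p; pose proof (Hid vzero) as Hb; fold b in Hb.
      rewrite <- (Hid p) at 2; rewrite HT, Hb; vring. }
    assert (Hd : det3 f1 f2 f3 = 1) by (unfold f1, f2, f3, b; rewrite !Hid; vring).
    pose proof (congruence_sign T eps0 f1 f2 f3 b 1 He0 Hset Hon HT (Hid (c 0))
                  ltac:(rewrite HA; vring) (HA _) ltac:(ring)); lra.
  - assert (Hrel : forall s, Iv l s -> vadd b (linmap f1 f2 f3 (c s)) = c (- s))
      by (intros s Hs; rewrite <- HT; auto).
    destruct (reflection_frame_at_0 l c U f1 f2 f3 b Hl Hsm HU Hon Hrel) as [HAe HAn].
    assert (Hc0 : T (c 0) = c 0) by (rewrite Hrefl, Ropp_0 by exact I0; reflexivity).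
    pose proof (congruence_sign T eps0 f1 f2 f3 b (-1) He0 Hset Hon HT Hc0 HAe HAn ltac:(ring)) as Hd.
    exists T; split; [exact HTiso|split; [|split; [|split]]].
    + unfold orientation_preserving; fold b f1 f2 f3; lra.
    + exists (c (l / 2)); intros Z; rewrite Hrefl in Z by (unfold Iv; lra).
      apply Hinj in Z; unfold Iv; lra.
    + intros s Hs; exists (- s); split; [unfold Iv in *; lra|]; apply Hrefl, Hs.
    + intros t Ht; exists (- t); split; [unfold Iv in *; lra|].
      rewrite Hrefl, Ropp_involutive by (unfold Iv in *; lra); reflexivity.
Qed.
End Congruence.

Theorem proposition4p6 :
  forall (l : R) (c : R -> vec) (F Fstar : R -> R -> vec) (alpha alphastar : R -> R),
    good_curve l c ->
    in_Dstar_normal l c F alpha ->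
    (* F_* : the inverse of F, a normal form in D_*(-C) along s |-> c(-s) *)
    in_Dstar_normal l (fun s => c (- s)) Fstar alphastar ->
    (forall s, Iv l s -> (0 < alphastar s <-> 0 < alpha s)) ->
    (forall s, Iv l s -> curv c (- s) * cos (alphastar s) = curv c s * cos (alpha s)) ->
    (congruent_small l F Fstar <-> exists T, positive_symmetry l c T).
Proof.
  intros l c F Fs alpha alphas Hgood HF HFs Hsign Hcurv.
  destruct Hgood as (Hl & [U [HU Hsm]] & Hnorm & Hinj & Hk & Hnp).
  assert (Hunit : forall s, Iv l s -> dot (vderive c s) (vderive c s) = 1)
    by (intros s Hs; apply vnorm_eq1, Hnorm, Hs).
  destruct (normal_form_decompose _ _ _ _ HF) as (xi & beta & eF & HeF & HFrep & HFd).
  destruct (normal_form_decompose _ _ _ _ HFs) as (xis & betas & eS & HeS & HSrep & HSd).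
  split.
  - apply (congruent_small_positive_symmetry l c U F Fs xi xis alpha beta alphas betas eF eS); assumption.
  - apply (positive_symmetry_congruent_small l c U F Fs xi xis alpha beta alphas betas eF eS); assumption.
Qed.
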